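(* Let $\langle A,B\rangle$ be a recursively inseparable pair. Then $\mathsf{G1}$ holds for the theory $U_{\langle A,B\rangle}$.
   Context: $\langle A,B\rangle$ is a recursively inseparable pair if $A,B$ are disjoint r.e. subsets of $\mathbb{N}$ and there is no recursive $X\subseteq\mathbb{N}$ with $A\subseteq X$ and $X\cap B=\emptyset$. $U_{\langle A,B\rangle}$ is the r.e. theory in the language $\{\mathbf 0,\mathbf S,\mathbf P\}$ ($\mathbf 0$ a constant, $\mathbf S$ unary function, $\mathbf P$ unary relation; $\overline n=\mathbf S^n\mathbf 0$) with axioms: $\overline m\neq\overline n$ for $m\neq n$; $\mathbf P(\overline n)$ for $n\in A$; $\neg\mathbf P(\overline n)$ for $n\in B$. ''$\mathsf{G1}$ holds for $T$'' means: for every recursively axiomatizable consistent theory $S$, if $T$ is interpretable in $S$ (relative interpretation) then $S$ is incomplete. *)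

From Stdlib Require Import List Arith.
Import ListNotations.

Inductive rf : Type :=
| rZ : rf
| rS : rf
| rP : nat -> rf
| rC : rf -> list rf -> rf
| rR : rf -> rf -> rf
| rM : rf -> rf.

Inductive eval : rf -> list nat -> nat -> Prop :=
| eZ v : eval rZ v 0
| eS v : eval rS v (S (hd 0 v))
| eP i v : eval (rP i) v (nth i v 0)
| eC f gs v ys y : evals gs v ys -> eval f ys y -> eval (rC f gs) v y
| eR0 f g v y : eval f v y -> eval (rR f g) (0 :: v) y
| eRS f g n v z y : eval (rR f g) (n :: v) z -> eval g (n :: z :: v) y ->
    eval (rR f g) (S n :: v) y
| eM f v n : eval f (n :: v) 0 ->
    (forall m, m < n -> exists k, eval f (m :: v) (S k)) -> eval (rM f) v n
with evals : list rf -> list nat -> list nat -> Prop :=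
| esnil v : evals nil v nil
| escons g gs v y ys : eval g v y -> evals gs v ys -> evals (g :: gs) v (y :: ys).

Definition recursive (X : nat -> Prop) : Prop :=
  exists f : rf, forall n, (X n -> eval f [n] 1) /\ (~ X n -> eval f [n] 0).

Definition re (X : nat -> Prop) : Prop :=
  exists f : rf, forall n, X n <-> exists y, eval f [n] y.

Definition rec_inseparable (A B : nat -> Prop) : Prop :=
  re A /\ re B /\ (forall n, ~ (A n /\ B n)) /\
  ~ (exists X, recursive X /\ (forall n, A n -> X n) /\ (forall n, X n -> ~ B n)).

(* function symbol f applied to a list of arguments; the pair
   (f, length args) identifies the symbol (index, arity) *)
Inductive term : Type :=
| var : nat -> term
| func : nat -> list term -> term.

Inductive form : Type :=
| fal : form
| rel : nat -> list term -> form
| eq : term -> term -> form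
| imp : form -> form -> form
| all : form -> form.

Definition neg (p : form) : form := imp p fal.
Definition tru : form := neg fal.
Definition and (p q : form) : form := neg (imp p (neg q)).
Definition ex (p : form) : form := neg (all (neg p)).
Definition exN (n : nat) (p : form) : form := Nat.iter n ex p.
Definition allN (n : nat) (p : form) : form := Nat.iter n all p.

Fixpoint tsubst (s : nat -> term) (t : term) : term :=
  match t with
  | var i => s i
  | func f ts => func f (map (tsubst s) ts)
  end.

Definition scons (t : term) (s : nat -> term) (i : nat) : term :=
  match i with 0 => t | S j => s j end.

Definition up (s : nat -> term) : nat -> term :=
  scons (var 0) (fun i => tsubst (fun k => var (S k)) (s i)).

Fixpoint fsubst (s : nat -> term) (p : form) : form :=
  match p with
  | fal => fal
  | rel r ts => rel r (map (tsubst s) ts)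
  | eq a b => eq (tsubst s a) (tsubst s b)
  | imp a b => imp (fsubst s a) (fsubst s b)
  | all a => all (fsubst (up s) a)
  end.

Definition shift (p : form) : form := fsubst (fun k => var (S k)) p.
Definition inst (t : term) (p : form) : form := fsubst (scons t var) p.

Fixpoint tbound (b : nat) (t : term) : Prop :=
  match t with
  | var i => i < b
  | func _ ts => (fix go (l : list term) : Prop :=
                   match l with nil => True | u :: l' => tbound b u /\ go l' end) ts
  end.

Fixpoint fbound (b : nat) (p : form) : Prop :=
  match p with
  | fal => True
  | rel _ ts => Forall (tbound b) ts
  | eq s t => tbound b s /\ tbound b t
  | imp a c => fbound b a /\ fbound b c
  | all a => fbound (S b) a
  end.

(* a language: which (index, arity) pairs are function / relation symbols *)
Fixpoint tlang (lf : nat -> nat -> Prop) (t : term) : Prop :=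
  match t with
  | var _ => True
  | func f ts => lf f (length ts) /\
      (fix go (l : list term) : Prop :=
         match l with nil => True | u :: l' => tlang lf u /\ go l' end) ts
  end.

Fixpoint flang (lf lr : nat -> nat -> Prop) (p : form) : Prop :=
  match p with
  | fal => True
  | rel r ts => lr r (length ts) /\ Forall (tlang lf) ts
  | eq s t => tlang lf s /\ tlang lf t
  | imp a c => flang lf lr a /\ flang lf lr c
  | all a => flang lf lr a
  end.

Inductive nd : list form -> form -> Prop :=
| ndAx G p : In p G -> nd G p
| ndII G p q : nd (p :: G) q -> nd G (imp p q)
| ndIE G p q : nd G (imp p q) -> nd G p -> nd G q
| ndAllI G p : nd (map shift G) p -> nd G (all p)
| ndAllE G p t : nd G (all p) -> nd G (inst t p)
| ndExp G p : nd G fal -> nd G p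
| ndDN G p : nd G (neg (neg p)) -> nd G p
| ndRefl G t : nd G (eq t t)
| ndLeib G s t p : nd G (eq s t) -> nd G (inst s p) -> nd G (inst t p).

Record theory : Type := Theory {
  th_fun : nat -> nat -> Prop;
  th_rel : nat -> nat -> Prop;
  th_ax  : form -> Prop
}.

Definition sentence_of (T : theory) (p : form) : Prop :=
  flang (th_fun T) (th_rel T) p /\ fbound 0 p.

Definition wf_theory (T : theory) : Prop :=
  forall p, th_ax T p -> sentence_of T p.

Definition provable (T : theory) (p : form) : Prop :=
  exists G, (forall q, In q G -> th_ax T q) /\ nd G p.

Definition consistent (T : theory) : Prop := ~ provable T fal.

Definition complete (T : theory) : Prop :=
  forall p, sentence_of T p -> provable T p \/ provable T (neg p).

Definition pr (a b : nat) : nat := (a + b) * (a + b + 1) / 2 + b.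

Fixpoint tcode (t : term) : nat :=
  match t with
  | var i => pr 0 i
  | func f ts => pr 1 (pr f ((fix go (l : list term) : nat :=
                              match l with nil => 0
                              | u :: l' => S (pr (tcode u) (go l')) end) ts))
  end.

Fixpoint lcode (l : list term) : nat :=
  match l with nil => 0 | u :: l' => S (pr (tcode u) (lcode l')) end.

Fixpoint fcode (p : form) : nat :=
  match p with
  | fal => pr 0 0
  | rel r ts => pr 1 (pr r (lcode ts))
  | eq s t => pr 2 (pr (tcode s) (tcode t))
  | imp a c => pr 3 (pr (fcode a) (fcode c))
  | all a => pr 4 (fcode a)
  end.

Definition rec_axiomatizable (T : theory) : Prop :=
  recursive (fun n => exists p, th_ax T p /\ fcode p = n).

(* i_dom : domain formula, free variable 0.
   i_fun f n : graph of n-ary f, var 0 = value, var (j+1) = j-th argument.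
   i_rel r n : n-ary relation r, var j = j-th argument.
   Equality is translated as equality. *)
Record interp : Type := Interp {
  i_dom : form;
  i_fun : nat -> nat -> form;
  i_rel : nat -> nat -> form
}.

Section Translation.
Variable I : interp.

(* ttr t off k : "the value of t (with its variables shifted by off) is var k" *)
Fixpoint ttr (t : term) (off k : nat) : form :=
  match t with
  | var i => eq (var (i + off)) (var k)
  | func f ts =>
      let n := length ts in
      exN n (and
        ((fix go (l : list term) (j : nat) : form :=
            match l with
            | nil => tru
            | u :: l' => and (ttr u (off + n) j) (go l' (S j))
            end) ts 0)
        (fsubst (scons (var (k + n)) var) (i_fun I f n)))
  end.

Fixpoint targs (ts : list term) (off j : nat) : form :=
  match ts with
  | nil => tru
  | u :: l => and (ttr u off j) (targs l off (S j))
  end.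

Fixpoint translate (p : form) : form :=
  match p with
  | fal => fal
  | rel r ts => let n := length ts in exN n (and (targs ts n 0) (i_rel I r n))
  | eq s t => ex (and (ttr s 1 0) (ttr t 1 0))
  | imp a c => imp (translate a) (translate c)
  | all a => all (imp (i_dom I) (translate a))
  end.

Fixpoint conjN (n : nat) (P : nat -> form) : form :=
  match n with 0 => tru | S m => and (conjN m P) (P m) end.

(* S-sentence expressing that i_fun f n defines a total function on the domain *)
Definition fun_total (f n : nat) : form :=
  allN n (imp (conjN n (fun j => inst (var j) (i_dom I)))
    (ex (and (i_dom I) (and (i_fun I f n)
      (all (imp (and (i_dom I)
                     (fsubst (scons (var 0) (fun j => var (S (S j)))) (i_fun I f n)))
                (eq (var 0) (var 1)))))))).

End Translation.

Definition is_interpretation (T W : theory) (I : interp) : Prop :=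
  flang (th_fun W) (th_rel W) (i_dom I) /\ fbound 1 (i_dom I) /\
  (forall f n, th_fun T f n ->
     flang (th_fun W) (th_rel W) (i_fun I f n) /\ fbound (S n) (i_fun I f n)) /\
  (forall r n, th_rel T r n ->
     flang (th_fun W) (th_rel W) (i_rel I r n) /\ fbound n (i_rel I r n)) /\
  provable W (ex (i_dom I)) /\
  (forall f n, th_fun T f n -> provable W (fun_total I f n)) /\
  (forall p, th_ax T p -> provable W (translate I p)).

Definition interpretable (T S : theory) : Prop :=
  exists I, is_interpretation T S I.

Definition G1 (T : theory) : Prop :=
  forall S : theory, wf_theory S -> rec_axiomatizable S -> consistent S ->
    interpretable T S -> ~ complete S.

(* 0 = function symbol (0, arity 0); S = function symbol (1, arity 1);
   P = relation symbol (0, arity 1) *)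
Definition zeroT : term := func 0 [].
Definition succT (t : term) : term := func 1 [t].
Definition numeral (n : nat) : term := Nat.iter n succT zeroT.

Definition U_AB (A B : nat -> Prop) : theory := {|
  th_fun := fun f n => (f = 0 /\ n = 0) \/ (f = 1 /\ n = 1);
  th_rel := fun r n => r = 0 /\ n = 1;
  th_ax := fun p =>
    (exists m n, m <> n /\ p = neg (eq (numeral m) (numeral n))) \/
    (exists n, A n /\ p = rel 0 [numeral n]) \/
    (exists n, B n /\ p = neg (rel 0 [numeral n]))
|}.

(* Suppose a consistent, complete theory S with recursive axioms interprets U_<A,B> by I.
   Then X = {n | S proves I(P(n))} separates A from B: A is contained in X because each P(n),
   n in A, is an axiom of U_<A,B>, and X misses B by consistency.  X is moreover recursive:
   by completeness S proves I(P(n)) or its negation, so an unbounded search through proof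
   certificates terminates, and consistency tells which of the two was found.  This
   contradicts the recursive inseparability of A and B.
   The certificates make "S proves p" checkable by a mu-recursive function: a certificate is
   a tree of coded judgements (derivations, list membership, substitution instances,
   axiomhood) in which every sub-certificate has a smaller code, so that validity is
   computed by course-of-values recursion. *)

From Stdlib Require Import List Arith Lia Bool ClassicalEpsilon.
Import ListNotations.

Definition computable (F : list nat -> nat) : Prop :=
  exists f, forall v, eval f v (F v).

Lemma computable_ext F G :
  (forall v, F v = G v) -> computable F -> computable G.
Proof. intros E [f Hf]; exists f; intro v; rewrite <- E; apply Hf. Qed.

Lemma computable_proj i : computable (fun v => nth i v 0).
Proof. exists (rP i); constructor. Qed.

Lemma computable_succ : computable (fun v => S (nth 0 v 0)).
Proof. exists rS; intros [|x v]; apply eS. Qed.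

Lemma computable_evals (gs : list (list nat -> nat)) :
  Forall computable gs -> exists fs, forall v, evals fs v (map (fun g => g v) gs).
Proof.
  induction 1 as [|g gs [f Hf] _ [fs Hfs]]; [exists []; constructor|].
  exists (f :: fs); constructor; auto.
Qed.

Lemma computable_comp (h : list nat -> nat) (gs : list (list nat -> nat)) :
  computable h -> Forall computable gs ->
  computable (fun v => h (map (fun g => g v) gs)).
Proof.
  intros [f Hf] Hgs; destruct (computable_evals gs Hgs) as [fs Hfs].
  exists (rC f fs); intro v; econstructor; [apply Hfs | apply Hf].
Qed.

Lemma computable_comp1 (h : nat -> nat) a :
  computable (fun v => h (nth 0 v 0)) -> computable a -> computable (fun v => h (a v)).
Proof.
  intros; apply (computable_comp (fun w => h (nth 0 w 0)) [a]); repeat constructor; assumption.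
Qed.

Lemma computable_comp2 (h : nat -> nat -> nat) a b :
  computable (fun v => h (nth 0 v 0) (nth 1 v 0)) -> computable a -> computable b ->
  computable (fun v => h (a v) (b v)).
Proof.
  intros; apply (computable_comp (fun w => h (nth 0 w 0) (nth 1 w 0)) [a; b]);
    repeat constructor; assumption.
Qed.

Lemma computable_comp3 (h : nat -> nat -> nat -> nat) a b c :
  computable (fun v => h (nth 0 v 0) (nth 1 v 0) (nth 2 v 0)) ->
  computable a -> computable b -> computable c ->
  computable (fun v => h (a v) (b v) (c v)).
Proof.
  intros; apply (computable_comp (fun w => h (nth 0 w 0) (nth 1 w 0) (nth 2 w 0)) [a; b; c]);
    repeat constructor; assumption.
Qed.

Lemma computable_const c : computable (fun _ => c).
Proof.
  induction c as [|c IH]; [exists rZ; constructor|].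
  exact (computable_comp1 S _ computable_succ IH).
Qed.

Definition prim_rec (b : nat -> nat) (s : nat -> nat -> nat -> nat) (n x : nat) : nat :=
  nat_rect (fun _ => nat) (b x) (fun k r => s k r x) n.

Lemma computable_prim_rec b s :
  computable (fun v => b (nth 0 v 0)) ->
  computable (fun v => s (nth 0 v 0) (nth 1 v 0) (nth 2 v 0)) ->
  computable (fun v => prim_rec b s (nth 0 v 0) (nth 1 v 0)).
Proof.
  intros [f Hf] [g Hg]; exists (rC (rR f g) [rP 0; rP 1]); intro v.
  econstructor; [repeat constructor|].
  generalize (nth 0 v 0) (nth 1 v 0); intros n x; induction n as [|n IH].
  - constructor; apply (Hf [x]).
  - econstructor; [exact IH | apply (Hg [n; prim_rec b s n x; x])].
Qed.

Lemma computable_add : computable (fun v => nth 0 v 0 + nth 1 v 0).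
Proof.
  eapply computable_ext; [|apply (computable_prim_rec (fun x => x) (fun _ r _ => S r))].
  - intro v; cbv beta; generalize (nth 0 v 0) (nth 1 v 0); intros n x.
    unfold prim_rec; induction n; cbn in *; lia.
  - apply computable_proj.
  - exact (computable_comp1 S _ computable_succ (computable_proj 1)).
Qed.

Lemma computable_mul : computable (fun v => nth 0 v 0 * nth 1 v 0).
Proof.
  eapply computable_ext; [|apply (computable_prim_rec (fun _ => 0) (fun _ r x => r + x))].
  - intro v; cbv beta; generalize (nth 0 v 0) (nth 1 v 0); intros n x.
    unfold prim_rec; induction n; cbn in *; lia.
  - apply computable_const.
  - exact (computable_comp2 Nat.add _ _ computable_add (computable_proj 1) (computable_proj 2)).
Qed.

Lemma computable_pred : computable (fun v => pred (nth 0 v 0)).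
Proof.
  eapply computable_ext; [|apply (computable_prim_rec (fun _ => 0) (fun k _ _ => k))].
  - intro v; cbv beta; destruct (nth 0 v 0); reflexivity.
  - apply computable_const.
  - apply computable_proj.
Qed.

Lemma computable_sub : computable (fun v => nth 0 v 0 - nth 1 v 0).
Proof.
  assert (H : computable (fun v =>
    prim_rec (fun x => x) (fun _ r _ => pred r) (nth 0 v 0) (nth 1 v 0))).
  { apply computable_prim_rec; [apply computable_proj|].
    exact (computable_comp1 pred _ computable_pred (computable_proj 1)). }
  eapply computable_ext;
    [|exact (computable_comp2 _ _ _ H (computable_proj 1) (computable_proj 0))].
  intro v; cbv beta; generalize (nth 0 v 0) (nth 1 v 0); intros x n.
  unfold prim_rec; induction n; cbn in *; lia.
Qed.

Lemma computable_if (b : list nat -> bool) x y :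
  computable (fun v => Nat.b2n (b v)) -> computable x -> computable y ->
  computable (fun v => if b v then x v else y v).
Proof.
  intros Hb Hx Hy.
  apply (computable_ext (fun v => Nat.b2n (b v) * x v + (1 - Nat.b2n (b v)) * y v)).
  { intro v; destruct (b v); cbn [Nat.b2n]; lia. }
  apply (computable_comp2 Nat.add); [exact computable_add| |].
  - exact (computable_comp2 Nat.mul _ _ computable_mul Hb Hx).
  - apply (computable_comp2 Nat.mul); [exact computable_mul| |exact Hy].
    exact (computable_comp2 Nat.sub _ _ computable_sub (computable_const 1) Hb).
Qed.

Lemma computable_b2n_if (b x y : list nat -> bool) :
  computable (fun v => if b v then Nat.b2n (x v) else Nat.b2n (y v)) ->
  computable (fun v => Nat.b2n (if b v then x v else y v)).
Proof. apply computable_ext; intro v; destruct (b v); reflexivity. Qed.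

Lemma computable_andb (a b : list nat -> bool) :
  computable (fun v => Nat.b2n (a v)) -> computable (fun v => Nat.b2n (b v)) ->
  computable (fun v => Nat.b2n (a v && b v)).
Proof.
  intros Ha Hb; apply (computable_ext (fun v => if a v then Nat.b2n (b v) else 0)).
  { intro v; destruct (a v); reflexivity. }
  exact (computable_if a _ _ Ha Hb (computable_const 0)).
Qed.

Lemma computable_orb (a b : list nat -> bool) :
  computable (fun v => Nat.b2n (a v)) -> computable (fun v => Nat.b2n (b v)) ->
  computable (fun v => Nat.b2n (a v || b v)).
Proof.
  intros Ha Hb; apply (computable_ext (fun v => if a v then 1 else Nat.b2n (b v))).
  { intro v; destruct (a v); reflexivity. }
  exact (computable_if a _ _ Ha (computable_const 1) Hb).
Qed.

Lemma computable_leb a b :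
  computable a -> computable b -> computable (fun v => Nat.b2n (a v <=? b v)).
Proof.
  intros Ha Hb; apply (computable_ext (fun v => 1 - (a v - b v))).
  { intro v; destruct (Nat.leb_spec (a v) (b v)); cbn [Nat.b2n]; lia. }
  apply (computable_comp2 Nat.sub); [exact computable_sub | apply computable_const|].
  exact (computable_comp2 Nat.sub _ _ computable_sub Ha Hb).
Qed.

Lemma computable_ltb a b :
  computable a -> computable b -> computable (fun v => Nat.b2n (a v <? b v)).
Proof.
  intros Ha Hb; apply (computable_ext (fun v => Nat.b2n (S (a v) <=? b v))); [reflexivity|].
  exact (computable_leb _ _ (computable_comp1 S _ computable_succ Ha) Hb).
Qed.

Lemma computable_eqb a b :
  computable a -> computable b -> computable (fun v => Nat.b2n (a v =? b v)).
Proof.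
  intros Ha Hb; apply (computable_ext (fun v => Nat.b2n ((a v <=? b v) && (b v <=? a v)))).
  { intro v; destruct (Nat.eqb_spec (a v) (b v)), (Nat.leb_spec (a v) (b v)),
      (Nat.leb_spec (b v) (a v)); cbn [Nat.b2n andb]; lia. }
  apply computable_andb; apply computable_leb; assumption.
Qed.

Create HintDb computable.
#[export] Hint Resolve computable_succ computable_add computable_mul computable_pred
  computable_sub : computable.

(* Decomposes [e] in [computable (fun v => e)] syntactically; the function symbols must be
   covered by hints or hypotheses stated for the arguments [nth 0 v 0], [nth 1 v 0], ... *)
Ltac computable_tac :=
  match goal with
  | |- computable (fun v => nth _ v 0) => apply computable_proj
  | |- computable (fun _ => _) => apply computable_const
  | |- computable (fun v => Nat.b2n (if @?b v then @?x v else @?y v)) =>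
      apply (computable_b2n_if b x y), (computable_if b); computable_tac
  | |- computable (fun v => if @?b v then @?x v else @?y v) =>
      apply (computable_if b x y); computable_tac
  | |- computable (fun v => Nat.b2n (@?a v && @?b v)) => apply (computable_andb a b); computable_tac
  | |- computable (fun v => Nat.b2n (@?a v || @?b v)) => apply (computable_orb a b); computable_tac
  | |- computable (fun v => Nat.b2n (@?a v =? @?b v)) => apply (computable_eqb a b); computable_tac
  | |- computable (fun v => Nat.b2n (@?a v <=? @?b v)) => apply (computable_leb a b); computable_tac
  | |- computable (fun v => Nat.b2n (@?a v <? @?b v)) => apply (computable_ltb a b); computable_tac
  | |- computable (fun v => Nat.b2n (?h (@?a v))) =>
      apply (computable_comp1 (fun x => Nat.b2n (h x)) a);
      [solve [eauto with computable] | computable_tac]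
  | |- computable (fun v => ?h (@?a v) (@?b v) (@?c v)) =>
      apply (computable_comp3 h a b c);
      [solve [eauto with computable] | computable_tac | computable_tac | computable_tac]
  | |- computable (fun v => ?h (@?a v) (@?b v)) =>
      apply (computable_comp2 h a b);
      [solve [eauto with computable] | computable_tac | computable_tac]
  | |- computable (fun v => ?h (@?a v)) =>
      apply (computable_comp1 h a); [solve [eauto with computable] | computable_tac]
  end.

Fixpoint tri (s : nat) : nat := match s with 0 => 0 | S k => tri k + S k end.

Lemma pr_tri a b : pr a b = tri (a + b) + b.
Proof.
  assert (E : forall s, 2 * tri s = s * (s + 1)) by (induction s; cbn [tri]; nia).
  unfold pr; f_equal; rewrite <- E, Nat.mul_comm; apply Nat.div_mul; lia.
Qed.

Lemma tri_le_mono a b : a <= b -> tri a <= tri b.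
Proof. induction 1; cbn; lia. Qed.

Lemma le_tri s : s <= tri s.
Proof. induction s; cbn; lia. Qed.

Definition tri_root (c : nat) : nat :=
  prim_rec (fun _ => 0) (fun k r _ => if tri (S r) <=? S k then S r else r) c 0.

Lemma tri_root_spec c : tri (tri_root c) <= c < tri (S (tri_root c)).
Proof.
  unfold tri_root, prim_rec; induction c as [|c IH]; cbn [nat_rect tri] in *; [lia|].
  set (d := nat_rect _ _ _ c) in *.
  destruct (Nat.leb_spec (tri d + S d) (S c)); cbn [tri] in *; lia.
Qed.

Lemma tri_root_unique c d : tri d <= c < tri (S d) -> tri_root c = d.
Proof.
  intros H; pose proof (tri_root_spec c).
  destruct (Nat.lt_trichotomy (tri_root c) d) as [Hl|[He|Hl]]; auto.
  - assert (tri (S (tri_root c)) <= tri d) by (apply tri_le_mono; lia); lia.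
  - assert (tri (S d) <= tri (tri_root c)) by (apply tri_le_mono; lia); lia.
Qed.

Definition pi2 (c : nat) : nat := c - tri (tri_root c).
Definition pi1 (c : nat) : nat := tri_root c - pi2 c.

Lemma pi1_pr a b : pi1 (pr a b) = a.
Proof.
  unfold pi1, pi2; rewrite pr_tri, (tri_root_unique _ (a + b)); cbn [tri]; lia.
Qed.

Lemma pi2_pr a b : pi2 (pr a b) = b.
Proof.
  unfold pi2; rewrite pr_tri, (tri_root_unique _ (a + b)); cbn [tri]; lia.
Qed.

Lemma pr_pi c : pr (pi1 c) (pi2 c) = c.
Proof.
  pose proof (tri_root_spec c) as H; cbn [tri] in H.
  rewrite pr_tri; unfold pi1, pi2.
  replace (tri_root c - (c - tri (tri_root c)) + (c - tri (tri_root c))) with (tri_root c)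
    by lia.
  lia.
Qed.

Lemma pr_ge_l a b : a <= pr a b.
Proof. rewrite pr_tri; pose proof (le_tri (a + b)); lia. Qed.

Lemma pr_ge_r a b : b <= pr a b.
Proof. rewrite pr_tri; lia. Qed.

Lemma pr_gt_r a b : 1 <= a -> b < pr a b.
Proof. intro; rewrite pr_tri; pose proof (le_tri (a + b)); lia. Qed.

Lemma pi1_le c : pi1 c <= c.
Proof. rewrite <- (pr_pi c) at 2; apply pr_ge_l. Qed.

Lemma pi2_le c : pi2 c <= c.
Proof. rewrite <- (pr_pi c) at 2; apply pr_ge_r. Qed.

Lemma pi2_lt c : 1 <= pi1 c -> pi2 c < c.
Proof. intro; rewrite <- (pr_pi c) at 2; apply pr_gt_r; assumption. Qed.

Lemma computable_tri : computable (fun v => tri (nth 0 v 0)).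
Proof.
  eapply computable_ext;
    [|apply (computable_prim_rec (fun _ => 0) (fun k r _ => r + S k)); computable_tac].
  intro v; cbv beta; unfold prim_rec; generalize (nth 0 v 0) (nth 1 v 0); intros n x.
  induction n; cbn in *; lia.
Qed.
#[export] Hint Resolve computable_tri : computable.

Lemma computable_tri_root : computable (fun v => tri_root (nth 0 v 0)).
Proof.
  unfold tri_root; apply (computable_comp2 (prim_rec _ _)); [|computable_tac..].
  apply computable_prim_rec; computable_tac.
Qed.
#[export] Hint Resolve computable_tri_root : computable.

Lemma computable_pi2 : computable (fun v => pi2 (nth 0 v 0)).
Proof. unfold pi2; computable_tac. Qed.
#[export] Hint Resolve computable_pi2 : computable.
Lemma computable_pi1 : computable (fun v => pi1 (nth 0 v 0)).
Proof. unfold pi1; computable_tac. Qed.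
Lemma computable_pr : computable (fun v => pr (nth 0 v 0) (nth 1 v 0)).
Proof. eapply computable_ext; [intro v; symmetry; apply pr_tri | computable_tac]. Qed.
#[export] Hint Resolve computable_pi1 computable_pr : computable.

#[global] Opaque pr pi1 pi2.

Definition seq_code (l : list nat) : nat := fold_right (fun x r => S (pr x r)) 0 l.

Fixpoint seq_decode_fuel (n c : nat) : list nat :=
  match n, c with
  | S n', S c' => pi1 c' :: seq_decode_fuel n' (pi2 c')
  | _, _ => []
  end.
Definition seq_decode (c : nat) : list nat := seq_decode_fuel c c.

Lemma seq_decode_fuel_enough n m c : c <= n -> c <= m -> seq_decode_fuel n c = seq_decode_fuel m c.
Proof.
  revert m c; induction n as [|n IH]; intros [|m] [|c] H1 H2; cbn; try reflexivity; try lia.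
  f_equal; apply IH; pose proof (pi2_le c); lia.
Qed.

Lemma seq_decode_S c : seq_decode (S c) = pi1 c :: seq_decode (pi2 c).
Proof.
  unfold seq_decode; cbn; f_equal; apply seq_decode_fuel_enough; pose proof (pi2_le c); lia.
Qed.

Lemma seq_decode_pos c : 0 < c -> seq_decode c = pi1 (pred c) :: seq_decode (pi2 (pred c)).
Proof. destruct c; [lia|]; intros _; apply seq_decode_S. Qed.

Lemma seq_decode_code l : seq_decode (seq_code l) = l.
Proof.
  induction l as [|x l IH]; [reflexivity|].
  change (seq_code (x :: l)) with (S (pr x (seq_code l))).
  rewrite seq_decode_S, pi1_pr, pi2_pr, IH; reflexivity.
Qed.

Lemma seq_decode_lt c x : In x (seq_decode c) -> x < c.
Proof.
  induction c as [c IH] using (well_founded_induction lt_wf); destruct c as [|c]; [cbn; tauto|].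
  rewrite seq_decode_S; intros [<-|H]; [pose proof (pi1_le c); lia|].
  pose proof (pi2_le c); specialize (IH (pi2 c) ltac:(lia) H); lia.
Qed.

(* Course-of-values recursion: [history F n] codes the values at [n - 1], ..., [0], in
   this order. *)
Fixpoint history (F : nat -> nat -> nat) (n : nat) : nat :=
  match n with 0 => 0 | S k => S (pr (F k (history F k)) (history F k)) end.

Definition cov_rec (F : nat -> nat -> nat) (c : nat) : nat := F c (history F c).

Definition iter_tail (k h : nat) : nat := prim_rec (fun x => x) (fun _ r _ => pi2 (pred r)) k h.

Definition history_nth (c h j : nat) : nat := pi1 (pred (iter_tail (c - 1 - j) h)).

Lemma history_nth_spec F c j : j < c -> history_nth c (history F c) j = cov_rec F j.
Proof.
  unfold history_nth, iter_tail, prim_rec.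
  induction c as [|c IH]; intro H; [lia|].
  destruct (Nat.eq_dec j c) as [->|Hne].
  - replace (S c - 1 - c) with 0 by lia; cbn; rewrite pi1_pr; reflexivity.
  - replace (S c - 1 - j) with (S (c - 1 - j)) by lia.
    rewrite <- IH by lia; f_equal; f_equal.
    generalize (c - 1 - j); intro k; induction k as [|k IHk]; cbn in *.
    + rewrite pi2_pr; reflexivity.
    + rewrite IHk; reflexivity.
Qed.

Lemma computable_history_nth :
  computable (fun v => history_nth (nth 0 v 0) (nth 1 v 0) (nth 2 v 0)).
Proof.
  unfold history_nth; apply (computable_comp1 (fun x => pi1 (pred x))); [computable_tac|].
  apply (computable_comp2 iter_tail); [|computable_tac..].
  apply computable_prim_rec; computable_tac.
Qed.
#[export] Hint Resolve computable_history_nth : computable.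

Lemma computable_cov_rec F :
  computable (fun v => F (nth 0 v 0) (nth 1 v 0)) -> computable (fun v => cov_rec F (nth 0 v 0)).
Proof.
  intro HF.
  assert (E : forall n x, prim_rec (fun _ => 0) (fun k r _ => S (pr (F k r) r)) n x = history F n)
    by (intros n x; unfold prim_rec; induction n as [|n IH]; cbn; [|rewrite IH]; reflexivity).
  apply (computable_ext
    (fun v => F (nth 0 v 0) (prim_rec (fun _ => 0) (fun k r _ => S (pr (F k r) r)) (nth 0 v 0) 0))).
  { intro v; rewrite E; reflexivity. }
  apply (computable_comp2 F); [exact HF | computable_tac |].
  apply (computable_comp2 (prim_rec _ _)); [apply computable_prim_rec | computable_tac..];
    computable_tac.
Qed.

Lemma term_rect' (P : term -> Prop) :
  (forall i, P (var i)) -> (forall f ts, Forall P ts -> P (func f ts)) -> forall t, P t.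
Proof.
  intros Hv Hf; fix IH 1; intros [i|f ts]; [apply Hv | apply Hf].
  induction ts as [|u ts IHts]; constructor; [apply IH | apply IHts].
Qed.

Lemma tsubst_ext s s' t : (forall i, s i = s' i) -> tsubst s t = tsubst s' t.
Proof.
  intro H; induction t as [i|f ts IH] using term_rect'; [apply H|].
  cbn; f_equal; induction IH; cbn; congruence.
Qed.

Lemma fsubst_ext p : forall s s', (forall i, s i = s' i) -> fsubst s p = fsubst s' p.
Proof.
  induction p; intros s s' H; cbn; f_equal; auto using tsubst_ext.
  - apply map_ext; intro; apply tsubst_ext; assumption.
  - apply IHp; intros [|i]; cbn; [reflexivity | rewrite H; reflexivity].
Qed.

Lemma tlang_func lf f ts : tlang lf (func f ts) <-> lf f (length ts) /\ Forall (tlang lf) ts.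
Proof.
  cbn [tlang]; apply and_iff_compat_l.
  induction ts as [|u ts IH]; cbn; [split; auto|].
  rewrite Forall_cons_iff, <- IH; reflexivity.
Qed.

Lemma tbound_func b f ts : tbound b (func f ts) <-> Forall (tbound b) ts.
Proof.
  cbn [tbound]; induction ts as [|u ts IH]; cbn; [split; auto|].
  rewrite Forall_cons_iff, <- IH; reflexivity.
Qed.

Lemma tlang_subst lf t s : tlang lf t -> (forall i, tlang lf (s i)) -> tlang lf (tsubst s t).
Proof.
  intros Ht Hs; induction t as [i|f ts IH] using term_rect'; [apply Hs|].
  apply tlang_func in Ht as [H1 H2]; cbn [tsubst]; apply tlang_func.
  rewrite length_map; split; [assumption|]; clear H1.
  induction IH; inversion H2; subst; constructor; auto.
Qed.

Lemma flang_subst lf lr p : forall s,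
  flang lf lr p -> (forall i, tlang lf (s i)) -> flang lf lr (fsubst s p).
Proof.
  induction p; intros s Hp Hs; cbn in *; auto.
  - destruct Hp as [H1 H2]; rewrite length_map; split; [assumption|].
    apply Forall_map; eapply Forall_impl; [|exact H2]; intros; apply tlang_subst; auto.
  - destruct Hp; split; apply tlang_subst; auto.
  - destruct Hp; split; auto.
  - apply IHp; [assumption|]; intros [|i]; cbn; [exact I|].
    apply tlang_subst; [apply Hs | intro; exact I].
Qed.

Lemma tbound_subst b b' t s :
  tbound b t -> (forall i, i < b -> tbound b' (s i)) -> tbound b' (tsubst s t).
Proof.
  intros Ht Hs; induction t as [i|f ts IH] using term_rect'; [apply Hs, Ht|].
  apply tbound_func in Ht; cbn [tsubst]; apply tbound_func.
  induction IH; inversion Ht; subst; constructor; auto.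
Qed.

Lemma fbound_subst p : forall b b' s,
  fbound b p -> (forall i, i < b -> tbound b' (s i)) -> fbound b' (fsubst s p).
Proof.
  induction p; intros b b' s Hp Hs; cbn in *; auto.
  - apply Forall_map; eapply Forall_impl; [|exact Hp]; intros; eapply tbound_subst; eauto.
  - destruct Hp; split; eapply tbound_subst; eauto.
  - destruct Hp; split; eauto.
  - eapply IHp; [eassumption|]; intros [|i] Hi; cbn; [lia|].
    eapply tbound_subst; [apply Hs; lia | intros j Hj; cbn; lia].
Qed.

Lemma tbound_mono t b b' : tbound b t -> b <= b' -> tbound b' t.
Proof.
  intros Ht Hb; induction t as [i|f ts IH] using term_rect'; [cbn in *; lia|].
  apply tbound_func in Ht; apply tbound_func.
  induction IH; inversion Ht; subst; constructor; auto.
Qed.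

Lemma fbound_mono p : forall b b', fbound b p -> b <= b' -> fbound b' p.
Proof.
  induction p; intros b b' H Hb; cbn in *; auto.
  - eapply Forall_impl; [|exact H]; intros; eapply tbound_mono; eauto.
  - destruct H; split; eapply tbound_mono; eauto.
  - destruct H; split; eauto.
  - eapply IHp; [eassumption | lia].
Qed.

Lemma nd_weaken G p : nd G p -> forall G', incl G G' -> nd G' p.
Proof.
  induction 1; intros G' Hi.
  - apply ndAx; auto.
  - apply ndII, IHnd; intros x [->|Hx]; [left|right]; auto.
  - eapply ndIE; eauto.
  - apply ndAllI, IHnd, incl_map; assumption.
  - apply ndAllE; auto.
  - apply ndExp; auto.
  - apply ndDN; auto.
  - apply ndRefl.
  - eapply ndLeib; eauto.
Qed.

Lemma provable_mp T p q : provable T (imp p q) -> provable T p -> provable T q.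
Proof.
  intros [G1 [H1 D1]] [G2 [H2 D2]]; exists (G1 ++ G2); split.
  - intros x Hx; apply in_app_or in Hx as [Hx|Hx]; auto.
  - eapply ndIE; eapply nd_weaken; eauto; intros x Hx; apply in_or_app; auto.
Qed.

Lemma lcode_seq_code ts : lcode ts = seq_code (map tcode ts).
Proof. induction ts as [|t ts IH]; [reflexivity|]; cbn [lcode]; rewrite IH; reflexivity. Qed.

Lemma tcode_func f ts : tcode (func f ts) = pr 1 (pr f (seq_code (map tcode ts))).
Proof. rewrite <- lcode_seq_code; cbn; do 2 f_equal; induction ts; cbn; congruence. Qed.

Lemma fcode_rel r ts : fcode (rel r ts) = pr 1 (pr r (seq_code (map tcode ts))).
Proof. cbn; rewrite lcode_seq_code; reflexivity. Qed.

Fixpoint tdecode_fuel (n c : nat) : term :=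
  match n with
  | 0 => var 0
  | S n' =>
      if pi1 c =? 0 then var (pi2 c)
      else if pi1 c =? 1 then func (pi1 (pi2 c)) (map (tdecode_fuel n') (seq_decode (pi2 (pi2 c))))
      else var 0
  end.
Definition tdecode (c : nat) : term := tdecode_fuel (S c) c.

Lemma tdecode_fuel_enough n m c : c < n -> c < m -> tdecode_fuel n c = tdecode_fuel m c.
Proof.
  revert m c; induction n as [|n IH]; intros [|m] c H1 H2; try lia; cbn [tdecode_fuel].
  destruct (pi1 c =? 0); [reflexivity|].
  destruct (Nat.eqb_spec (pi1 c) 1) as [E|]; [|reflexivity].
  f_equal; apply map_ext_in; intros x Hx; apply seq_decode_lt in Hx.
  pose proof (pi2_le (pi2 c)); pose proof (pi2_lt c ltac:(lia)); apply IH; lia.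
Qed.

Lemma tdecode_var c : pi1 c = 0 -> tdecode c = var (pi2 c).
Proof. intro H; unfold tdecode; cbn [tdecode_fuel]; rewrite H; reflexivity. Qed.

Lemma tdecode_func c :
  pi1 c = 1 -> tdecode c = func (pi1 (pi2 c)) (map tdecode (seq_decode (pi2 (pi2 c)))).
Proof.
  intro H; unfold tdecode at 1; cbn [tdecode_fuel]; rewrite H; cbn [Nat.eqb].
  f_equal; apply map_ext_in; intros x Hx; apply seq_decode_lt in Hx.
  pose proof (pi2_le (pi2 c)); pose proof (pi2_lt c ltac:(lia)).
  apply tdecode_fuel_enough; lia.
Qed.

Lemma tdecode_pr_var i : tdecode (pr 0 i) = var i.
Proof. rewrite tdecode_var, pi2_pr; [reflexivity | apply pi1_pr]. Qed.

Lemma tdecode_tcode t : tdecode (tcode t) = t.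
Proof.
  induction t as [i|f ts IH] using term_rect'; [apply tdecode_pr_var|].
  rewrite tcode_func, tdecode_func, !pi2_pr, pi1_pr, seq_decode_code, map_map; [|apply pi1_pr].
  f_equal; induction IH; cbn [map]; congruence.
Qed.

Lemma tdecode_seq_code ts : map tdecode (seq_decode (seq_code (map tcode ts))) = ts.
Proof.
  rewrite seq_decode_code, map_map; induction ts; cbn [map]; [|rewrite tdecode_tcode]; congruence.
Qed.

Fixpoint fdecode_fuel (n c : nat) : form :=
  match n with
  | 0 => fal
  | S n' =>
      if pi1 c =? 1 then rel (pi1 (pi2 c)) (map tdecode (seq_decode (pi2 (pi2 c))))
      else if pi1 c =? 2 then eq (tdecode (pi1 (pi2 c))) (tdecode (pi2 (pi2 c)))
      else if pi1 c =? 3 then imp (fdecode_fuel n' (pi1 (pi2 c))) (fdecode_fuel n' (pi2 (pi2 c)))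
      else if pi1 c =? 4 then all (fdecode_fuel n' (pi2 c))
      else fal
  end.
Definition fdecode (c : nat) : form := fdecode_fuel (S c) c.

Lemma fdecode_fuel_enough n m c : c < n -> c < m -> fdecode_fuel n c = fdecode_fuel m c.
Proof.
  revert m c; induction n as [|n IH]; intros [|m] c H1 H2; try lia; cbn [fdecode_fuel].
  destruct (pi1 c =? 1); [reflexivity|].
  destruct (pi1 c =? 2); [reflexivity|].
  destruct (Nat.eqb_spec (pi1 c) 3).
  { pose proof (pi1_le (pi2 c)); pose proof (pi2_le (pi2 c)); pose proof (pi2_lt c ltac:(lia)).
    f_equal; apply IH; lia. }
  destruct (Nat.eqb_spec (pi1 c) 4); [|reflexivity].
  pose proof (pi2_lt c ltac:(lia)); f_equal; apply IH; lia.
Qed.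

Lemma fdecode_fal c : pi1 c = 0 -> fdecode c = fal.
Proof. intro H; unfold fdecode; cbn [fdecode_fuel]; rewrite H; reflexivity. Qed.

Lemma fdecode_rel c :
  pi1 c = 1 -> fdecode c = rel (pi1 (pi2 c)) (map tdecode (seq_decode (pi2 (pi2 c)))).
Proof. intro H; unfold fdecode; cbn [fdecode_fuel]; rewrite H; reflexivity. Qed.

Lemma fdecode_eq c : pi1 c = 2 -> fdecode c = eq (tdecode (pi1 (pi2 c))) (tdecode (pi2 (pi2 c))).
Proof. intro H; unfold fdecode; cbn [fdecode_fuel]; rewrite H; reflexivity. Qed.

Lemma fdecode_imp c : pi1 c = 3 -> fdecode c = imp (fdecode (pi1 (pi2 c))) (fdecode (pi2 (pi2 c))).
Proof.
  intro H; unfold fdecode at 1; cbn [fdecode_fuel]; rewrite H; cbn [Nat.eqb]; unfold fdecode.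
  pose proof (pi1_le (pi2 c)); pose proof (pi2_le (pi2 c)); pose proof (pi2_lt c ltac:(lia)).
  f_equal; apply fdecode_fuel_enough; lia.
Qed.

Lemma fdecode_all c : pi1 c = 4 -> fdecode c = all (fdecode (pi2 c)).
Proof.
  intro H; unfold fdecode at 1; cbn [fdecode_fuel]; rewrite H; cbn [Nat.eqb]; unfold fdecode.
  pose proof (pi2_lt c ltac:(lia)); f_equal; apply fdecode_fuel_enough; lia.
Qed.

Lemma fdecode_zero : fdecode 0 = fal.
Proof. apply fdecode_fal; change 0 with (pr 0 0); apply pi1_pr. Qed.

Lemma fdecode_pr_eq a b : fdecode (pr 2 (pr a b)) = eq (tdecode a) (tdecode b).
Proof. rewrite fdecode_eq; repeat rewrite ?pi1_pr, ?pi2_pr; reflexivity. Qed.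

Lemma fdecode_pr_imp a b : fdecode (pr 3 (pr a b)) = imp (fdecode a) (fdecode b).
Proof. rewrite fdecode_imp; repeat rewrite ?pi1_pr, ?pi2_pr; reflexivity. Qed.

Lemma fdecode_pr_all a : fdecode (pr 4 a) = all (fdecode a).
Proof. rewrite fdecode_all; repeat rewrite ?pi1_pr, ?pi2_pr; reflexivity. Qed.

Lemma fdecode_fcode p : fdecode (fcode p) = p.
Proof.
  induction p; cbn [fcode].
  - apply fdecode_fal, pi1_pr.
  - rewrite fdecode_rel, !pi2_pr, pi1_pr, lcode_seq_code, tdecode_seq_code; [|apply pi1_pr].
    reflexivity.
  - rewrite fdecode_pr_eq, !tdecode_tcode; reflexivity.
  - rewrite fdecode_pr_imp; congruence.
  - rewrite fdecode_pr_all; congruence.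
Qed.

(* Substitutions are coded by [pr 0 m] (lift the variables [>= m]) and
   [pr 1 (pr m u)] (replace variable [m] by the term coded by [u] and lower those above);
   every other code denotes the identity. *)
Definition subst_of_code (d i : nat) : term :=
  if pi1 d =? 0 then (if i <? pi2 d then var i else var (S i))
  else if pi1 d =? 1 then
    (if i <? pi1 (pi2 d) then var i
     else if i =? pi1 (pi2 d) then tdecode (pi2 (pi2 d)) else var (pred i))
  else var i.

Lemma subst_of_code_shift i : subst_of_code (pr 0 0) i = var (S i).
Proof. unfold subst_of_code; rewrite pi1_pr, pi2_pr; reflexivity. Qed.

Lemma tsubst_code_shift t : tsubst (subst_of_code (pr 0 0)) t = tsubst (fun k => var (S k)) t.
Proof. apply tsubst_ext, subst_of_code_shift. Qed.

Lemma subst_of_code_inst0 u i : subst_of_code (pr 1 (pr 0 u)) i = scons (tdecode u) var i.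
Proof.
  unfold subst_of_code; repeat rewrite ?pi1_pr, ?pi2_pr; cbn [Nat.eqb].
  destruct i; reflexivity.
Qed.

Lemma up_subst_of_code_lift m i : up (subst_of_code (pr 0 m)) i = subst_of_code (pr 0 (S m)) i.
Proof.
  unfold subst_of_code; rewrite !pi1_pr, !pi2_pr; cbn [Nat.eqb].
  destruct i as [|i]; [reflexivity|]; unfold up, scons.
  destruct (Nat.ltb_spec i m), (Nat.ltb_spec (S i) (S m)); cbn; reflexivity || lia.
Qed.

Lemma up_subst_of_code_inst m u u' i :
  tdecode u' = tsubst (fun k => var (S k)) (tdecode u) ->
  up (subst_of_code (pr 1 (pr m u))) i = subst_of_code (pr 1 (pr (S m) u')) i.
Proof.
  intro Hu; unfold subst_of_code; repeat rewrite ?pi1_pr, ?pi2_pr; cbn [Nat.eqb].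
  destruct i as [|i]; [reflexivity|]; unfold up, scons.
  destruct (Nat.ltb_spec i m), (Nat.ltb_spec (S i) (S m)); try lia; [reflexivity|].
  destruct (Nat.eqb_spec i m), (Nat.eqb_spec (S i) (S m)); try lia; [congruence|].
  destruct i; [lia | reflexivity].
Qed.

(* A certificate [cert_node k r C a b x y] claims the judgement of kind [k] about [C], by
   rule [r] from the sub-certificates [a], [b], [x], [y] (those not needed are [0]); the
   rules of kind 1 are the constructors of [nd], in order.  The kinds and their claims:
   1: [pr G p], the formula [p] is derivable from the list of formulas [G];
   2: [pr x L], [x] is an element of the list [L];
   3: [pr L L'], the list of formulas [L'] is [L] shifted;
   4, 5, 6: [pr d (pr a b)], the term / list of terms / formula [b] is [a] under the
            substitution coded by [d];
   7: [L], every element of [L] is an axiom;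
   8: [pr G p], as 1, and every formula in [G] is an axiom. *)
Lemma cert_node_sealed :
  {node : nat -> nat -> nat -> nat -> nat -> nat -> nat -> nat |
    forall k r C a b x y, node k r C a b x y = pr (pr k r) (pr C (pr a (pr b (pr x y))))}.
Proof. eexists; intros; reflexivity. Qed.

(* Sealed, so that rewriting never unfolds a closed certificate into a numeral. *)
Definition cert_node := proj1_sig cert_node_sealed.
Definition cert_kind c := pi1 (pi1 c).
Definition cert_rule c := pi2 (pi1 c).
Definition cert_claim c := pi1 (pi2 c).
Definition cert_sub1 c := pi1 (pi2 (pi2 c)).
Definition cert_sub2 c := pi1 (pi2 (pi2 (pi2 c))).
Definition cert_sub3 c := pi1 (pi2 (pi2 (pi2 (pi2 c)))).
Definition cert_sub4 c := pi2 (pi2 (pi2 (pi2 (pi2 c)))).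

Lemma cert_kind_node k r C a b x y : cert_kind (cert_node k r C a b x y) = k.
Proof. unfold cert_kind; rewrite (proj2_sig cert_node_sealed), !pi1_pr; reflexivity. Qed.
Lemma cert_rule_node k r C a b x y : cert_rule (cert_node k r C a b x y) = r.
Proof. unfold cert_rule; rewrite (proj2_sig cert_node_sealed), pi1_pr, pi2_pr; reflexivity. Qed.
Lemma cert_claim_node k r C a b x y : cert_claim (cert_node k r C a b x y) = C.
Proof. unfold cert_claim; rewrite (proj2_sig cert_node_sealed), pi2_pr, pi1_pr; reflexivity. Qed.
Lemma cert_sub1_node k r C a b x y : cert_sub1 (cert_node k r C a b x y) = a.
Proof. unfold cert_sub1; rewrite (proj2_sig cert_node_sealed), !pi2_pr, pi1_pr; reflexivity. Qed.
Lemma cert_sub2_node k r C a b x y : cert_sub2 (cert_node k r C a b x y) = b.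
Proof. unfold cert_sub2; rewrite (proj2_sig cert_node_sealed), !pi2_pr, pi1_pr; reflexivity. Qed.
Lemma cert_sub3_node k r C a b x y : cert_sub3 (cert_node k r C a b x y) = x.
Proof. unfold cert_sub3; rewrite (proj2_sig cert_node_sealed), !pi2_pr, pi1_pr; reflexivity. Qed.
Lemma cert_sub4_node k r C a b x y : cert_sub4 (cert_node k r C a b x y) = y.
Proof. unfold cert_sub4; rewrite (proj2_sig cert_node_sealed), !pi2_pr; reflexivity. Qed.

Lemma cert_subs_lt c :
  1 <= cert_kind c ->
  cert_sub1 c < c /\ cert_sub2 c < c /\ cert_sub3 c < c /\ cert_sub4 c < c.
Proof.
  unfold cert_kind, cert_sub1, cert_sub2, cert_sub3, cert_sub4; intro H.
  pose proof (pi1_le (pi1 c)); pose proof (pi2_lt c ltac:(lia)).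
  pose proof (pi1_le (pi2 (pi2 c))); pose proof (pi2_le (pi2 c)).
  pose proof (pi1_le (pi2 (pi2 (pi2 c)))); pose proof (pi2_le (pi2 (pi2 c))).
  pose proof (pi1_le (pi2 (pi2 (pi2 (pi2 c))))); pose proof (pi2_le (pi2 (pi2 (pi2 c)))).
  pose proof (pi2_le (pi2 (pi2 (pi2 (pi2 c))))); lia.
Qed.

Lemma cert_node_subs_lt k r C a b x y :
  1 <= k ->
  a < cert_node k r C a b x y /\ b < cert_node k r C a b x y /\
  x < cert_node k r C a b x y /\ y < cert_node k r C a b x y.
Proof.
  intro H; pose proof (cert_subs_lt (cert_node k r C a b x y)) as L.
  rewrite cert_kind_node, cert_sub1_node, cert_sub2_node, cert_sub3_node, cert_sub4_node in L.
  auto.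
Qed.

(* In the history [h] of the checker below [c], [j] is a valid certificate of kind [k]
   claiming [C]. *)
Definition premise (c h j k C : nat) : bool :=
  (cert_kind j =? k) && (history_nth c h j =? 1) && (cert_claim j =? C).

Section Checker.
Variable is_axiom : nat -> bool.

Definition check_nd c h :=
  let G := pi1 (cert_claim c) in let p := pi2 (cert_claim c) in
  let c1 := cert_sub1 c in let c2 := cert_sub2 c in
  let c3 := cert_sub3 c in let c4 := cert_sub4 c in
  ((cert_rule c =? 0) && premise c h c1 2 (pr p G)) ||
  ((cert_rule c =? 1) && (pi1 p =? 3) &&
     premise c h c1 1 (pr (S (pr (pi1 (pi2 p)) G)) (pi2 (pi2 p)))) ||
  ((cert_rule c =? 2) && premise c h c2 1 (pr G (pi2 (cert_claim c2))) &&
     premise c h c1 1 (pr G (pr 3 (pr (pi2 (cert_claim c2)) p)))) ||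
  ((cert_rule c =? 3) && (pi1 p =? 4) && premise c h c1 1 (pr (pi1 (cert_claim c1)) (pi2 p)) &&
     premise c h c2 3 (pr G (pi1 (cert_claim c1)))) ||
  ((cert_rule c =? 4) && premise c h c1 1 (pr G (pr 4 (pi2 (pi2 (cert_claim c1))))) &&
     (pi1 (pi1 (cert_claim c2)) =? 1) && (pi1 (pi2 (pi1 (cert_claim c2))) =? 0) &&
     premise c h c2 6 (pr (pi1 (cert_claim c2)) (pr (pi2 (pi2 (cert_claim c1))) p))) ||
  ((cert_rule c =? 5) && premise c h c1 1 (pr G 0)) ||
  ((cert_rule c =? 6) && premise c h c1 1 (pr G (pr 3 (pr (pr 3 (pr p 0)) 0)))) ||
  ((cert_rule c =? 7) && (pi1 p =? 2) && (pi1 (pi2 p) =? pi2 (pi2 p))) ||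
  ((cert_rule c =? 8) &&
     premise c h c1 1 (pr G (pr 2 (pr (pi1 (pi2 (pi2 (cert_claim c1))))
                                   (pi2 (pi2 (pi2 (cert_claim c1))))))) &&
     premise c h c2 1 (pr G (pi2 (cert_claim c2))) &&
     premise c h c3 6 (pr (pr 1 (pr 0 (pi1 (pi2 (pi2 (cert_claim c1))))))
                          (pr (pi1 (pi2 (cert_claim c3))) (pi2 (cert_claim c2)))) &&
     premise c h c4 6 (pr (pr 1 (pr 0 (pi2 (pi2 (pi2 (cert_claim c1))))))
                          (pr (pi1 (pi2 (cert_claim c3))) p))).

Definition check_mem c h :=
  let x := pi1 (cert_claim c) in let L := pi2 (cert_claim c) in
  ((cert_rule c =? 0) && (0 <? L) && (pi1 (pred L) =? x)) ||
  ((cert_rule c =? 1) && (0 <? L) && premise c h (cert_sub1 c) 2 (pr x (pi2 (pred L)))).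

Definition check_shift c h :=
  let L := pi1 (cert_claim c) in let L' := pi2 (cert_claim c) in
  ((cert_rule c =? 0) && (L =? 0) && (L' =? 0)) ||
  ((cert_rule c =? 1) && (0 <? L) && (0 <? L') &&
     premise c h (cert_sub1 c) 6 (pr (pr 0 0) (pr (pi1 (pred L)) (pi1 (pred L')))) &&
     premise c h (cert_sub2 c) 3 (pr (pi2 (pred L)) (pi2 (pred L')))).

Definition check_tsubst c h :=
  let d := pi1 (cert_claim c) in
  let a := pi1 (pi2 (cert_claim c)) in let b := pi2 (pi2 (cert_claim c)) in
  ((cert_rule c =? 0) && (pi1 a =? 0) &&
    (((pi1 d =? 0) && (b =? pr 0 (if pi2 a <? pi2 d then pi2 a else S (pi2 a)))) ||
     ((pi1 d =? 1) && (if pi2 a <? pi1 (pi2 d) then b =? pr 0 (pi2 a)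
                      else if pi2 a =? pi1 (pi2 d) then b =? pi2 (pi2 d)
                      else b =? pr 0 (pred (pi2 a)))))) ||
  ((cert_rule c =? 1) && (pi1 a =? 1) && (pi1 b =? 1) && (pi1 (pi2 a) =? pi1 (pi2 b)) &&
     premise c h (cert_sub1 c) 5 (pr d (pr (pi2 (pi2 a)) (pi2 (pi2 b))))).

Definition check_tsubsts c h :=
  let d := pi1 (cert_claim c) in
  let a := pi1 (pi2 (cert_claim c)) in let b := pi2 (pi2 (cert_claim c)) in
  ((cert_rule c =? 0) && (a =? 0) && (b =? 0)) ||
  ((cert_rule c =? 1) && (0 <? a) && (0 <? b) &&
     premise c h (cert_sub1 c) 4 (pr d (pr (pi1 (pred a)) (pi1 (pred b)))) &&
     premise c h (cert_sub2 c) 5 (pr d (pr (pi2 (pred a)) (pi2 (pred b))))).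

Definition check_fsubst c h :=
  let d := pi1 (cert_claim c) in
  let a := pi1 (pi2 (cert_claim c)) in let b := pi2 (pi2 (cert_claim c)) in
  ((cert_rule c =? 0) && (a =? 0) && (b =? 0)) ||
  ((cert_rule c =? 1) && (pi1 a =? 1) && (pi1 b =? 1) && (pi1 (pi2 a) =? pi1 (pi2 b)) &&
     premise c h (cert_sub1 c) 5 (pr d (pr (pi2 (pi2 a)) (pi2 (pi2 b))))) ||
  ((cert_rule c =? 2) && (pi1 a =? 2) && (pi1 b =? 2) &&
     premise c h (cert_sub1 c) 4 (pr d (pr (pi1 (pi2 a)) (pi1 (pi2 b)))) &&
     premise c h (cert_sub2 c) 4 (pr d (pr (pi2 (pi2 a)) (pi2 (pi2 b))))) ||
  ((cert_rule c =? 3) && (pi1 a =? 3) && (pi1 b =? 3) &&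
     premise c h (cert_sub1 c) 6 (pr d (pr (pi1 (pi2 a)) (pi1 (pi2 b)))) &&
     premise c h (cert_sub2 c) 6 (pr d (pr (pi2 (pi2 a)) (pi2 (pi2 b))))) ||
  ((cert_rule c =? 4) && (pi1 a =? 4) && (pi1 b =? 4) &&
    (((pi1 d =? 0) &&
        premise c h (cert_sub1 c) 6 (pr (pr 0 (S (pi2 d))) (pr (pi2 a) (pi2 b)))) ||
     ((pi1 d =? 1) &&
        premise c h (cert_sub2 c) 4
          (pr (pr 0 0) (pr (pi2 (pi2 d)) (pi2 (pi2 (cert_claim (cert_sub2 c)))))) &&
        premise c h (cert_sub1 c) 6
          (pr (pr 1 (pr (S (pi1 (pi2 d))) (pi2 (pi2 (cert_claim (cert_sub2 c))))))
              (pr (pi2 a) (pi2 b)))))).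

Definition check_axioms c h :=
  ((cert_rule c =? 0) && (cert_claim c =? 0)) ||
  ((cert_rule c =? 1) && (0 <? cert_claim c) && is_axiom (pi1 (pred (cert_claim c))) &&
     premise c h (cert_sub1 c) 7 (pi2 (pred (cert_claim c)))).

Definition check_proof c h :=
  premise c h (cert_sub1 c) 1 (cert_claim c) && premise c h (cert_sub2 c) 7 (pi1 (cert_claim c)).

Definition check_node c h :=
  ((cert_kind c =? 1) && check_nd c h) || ((cert_kind c =? 2) && check_mem c h) ||
  ((cert_kind c =? 3) && check_shift c h) || ((cert_kind c =? 4) && check_tsubst c h) ||
  ((cert_kind c =? 5) && check_tsubsts c h) || ((cert_kind c =? 6) && check_fsubst c h) ||
  ((cert_kind c =? 7) && check_axioms c h) || ((cert_kind c =? 8) && check_proof c h).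

Definition check_step c h := Nat.b2n (check_node c h).
Definition valid c := check_node c (history check_step c).

Lemma premise_history c j k C :
  j < c ->
  premise c (history check_step c) j k C = (cert_kind j =? k) && valid j && (cert_claim j =? C).
Proof.
  intro H; unfold premise; rewrite history_nth_spec by assumption.
  unfold cov_rec, valid, check_step; destruct (check_node j _); reflexivity.
Qed.

Hypothesis computable_is_axiom : computable (fun v => Nat.b2n (is_axiom (nth 0 v 0))).

Lemma computable_valid : computable (fun v => Nat.b2n (valid (nth 0 v 0))).
Proof.
  enough (H : computable (fun v => check_step (nth 0 v 0) (nth 1 v 0)))
    by exact (computable_cov_rec check_step H).
  unfold check_step, check_node, check_nd, check_mem, check_shift, check_tsubst, check_tsubsts,
    check_fsubst, check_axioms, check_proof, premise, cert_kind, cert_rule, cert_claim,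
    cert_sub1, cert_sub2, cert_sub3, cert_sub4.
  cbv beta zeta; computable_tac.
Qed.

End Checker.

Ltac split_bool := repeat match goal with
  | H : (_ || _) = true |- _ => apply orb_true_iff in H; destruct H as [H|H]
  | H : (_ && _) = true |- _ =>
      let H' := fresh "H" in apply andb_true_iff in H; destruct H as [H H']
  | H : (_ =? _) = true |- _ => apply Nat.eqb_eq in H
  | H : (_ <? _) = true |- _ => apply Nat.ltb_lt in H
  end.

Section Soundness.
Variable is_axiom : nat -> bool.

Definition judgement (k C : nat) : Prop :=
  match k with
  | 1 => nd (map fdecode (seq_decode (pi1 C))) (fdecode (pi2 C))
  | 2 => In (pi1 C) (seq_decode (pi2 C))
  | 3 => map fdecode (seq_decode (pi2 C)) = map shift (map fdecode (seq_decode (pi1 C)))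
  | 4 => tdecode (pi2 (pi2 C)) = tsubst (subst_of_code (pi1 C)) (tdecode (pi1 (pi2 C)))
  | 5 => map tdecode (seq_decode (pi2 (pi2 C))) =
         map (tsubst (subst_of_code (pi1 C))) (map tdecode (seq_decode (pi1 (pi2 C))))
  | 6 => fdecode (pi2 (pi2 C)) = fsubst (subst_of_code (pi1 C)) (fdecode (pi1 (pi2 C)))
  | 7 => forall x, In x (seq_decode C) -> is_axiom x = true
  | 8 => nd (map fdecode (seq_decode (pi1 C))) (fdecode (pi2 C)) /\
         forall x, In x (seq_decode (pi1 C)) -> is_axiom x = true
  | _ => True
  end.

Definition sound_below (c : nat) : Prop :=
  forall j, j < c -> valid is_axiom j = true -> judgement (cert_kind j) (cert_claim j).

Lemma premise_sound c j k C :
  sound_below c -> j < c -> premise c (history (check_step is_axiom) c) j k C = true ->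
  judgement k C /\ cert_claim j = C.
Proof.
  intros IH Hj H; rewrite premise_history in H by assumption; split_bool.
  split; [subst; apply IH|]; assumption.
Qed.

Ltac use_premises IH c :=
  repeat match goal with
  | H : premise c _ (?sub c) _ _ = true |- _ =>
      let L := fresh in
      assert (L : sub c < c) by (pose proof (cert_subs_lt c ltac:(lia)); tauto);
      apply (premise_sound c (sub c) _ _ IH L) in H; destruct H; clear L
  end.

Ltac simpl_codes :=
  cbn [judgement map] in *;
  repeat progress (rewrite ?pi1_pr, ?pi2_pr, ?seq_decode_S in *);
  cbn [judgement map] in *.

Ltac simpl_fdecode := rewrite ?fdecode_pr_imp, ?fdecode_pr_all, ?fdecode_pr_eq, ?fdecode_zero in *.

Lemma subst_code_inst0 d : pi1 d = 1 -> pi1 (pi2 d) = 0 -> d = pr 1 (pr 0 (pi2 (pi2 d))).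
Proof. intros H1 H2; rewrite <- H1, <- H2, !pr_pi; reflexivity. Qed.

Lemma sound_nd c :
  sound_below c -> cert_kind c = 1 -> check_nd c (history (check_step is_axiom) c) = true ->
  judgement 1 (cert_claim c).
Proof.
  intros IH Hk H; unfold check_nd in H; cbv zeta in H; cbn [judgement].
  set (G := pi1 (cert_claim c)) in *; set (p := pi2 (cert_claim c)) in *.
  split_bool; use_premises IH c; simpl_codes.
  - apply ndAx, in_map; assumption.
  - rewrite fdecode_imp by assumption; apply ndII; assumption.
  - simpl_fdecode; eapply ndIE; eassumption.
  - rewrite fdecode_all by assumption; apply ndAllI.
    match goal with H : map fdecode _ = map shift _ |- _ => rewrite <- H end; assumption.
  - simpl_fdecode.
    match goal with H : fdecode p = _ |- _ => rewrite H end.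
    match goal with H1 : pi1 (pi1 ?d) = 1, H2 : pi1 (pi2 (pi1 ?d)) = 0 |- _ =>
      rewrite (subst_code_inst0 _ H1 H2) end.
    rewrite (fsubst_ext _ _ _ (subst_of_code_inst0 _)); apply ndAllE; assumption.
  - apply ndExp; simpl_fdecode; assumption.
  - apply ndDN; simpl_fdecode; assumption.
  - rewrite fdecode_eq by assumption.
    match goal with H : pi1 (pi2 p) = _ |- _ => rewrite H end; apply ndRefl.
  - simpl_fdecode.
    match goal with H : fdecode p = _ |- _ => rewrite H end.
    match goal with H : fdecode ?q = _, H' : nd _ (fdecode ?q) |- _ => rewrite H in H' end.
    rewrite (fsubst_ext _ _ _ (subst_of_code_inst0 _)).
    match goal with H' : nd _ (fsubst _ _) |- _ =>
      rewrite (fsubst_ext _ _ _ (subst_of_code_inst0 _)) in H' end.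
    eapply ndLeib; eassumption.
Qed.

Lemma sound_mem c :
  sound_below c -> cert_kind c = 2 -> check_mem c (history (check_step is_axiom) c) = true ->
  judgement 2 (cert_claim c).
Proof.
  intros IH Hk H; unfold check_mem in H; cbv zeta in H; cbn [judgement].
  split_bool; use_premises IH c; simpl_codes; rewrite seq_decode_pos by assumption.
  - left; assumption.
  - right; assumption.
Qed.

Lemma sound_shift c :
  sound_below c -> cert_kind c = 3 -> check_shift c (history (check_step is_axiom) c) = true ->
  judgement 3 (cert_claim c).
Proof.
  intros IH Hk H; unfold check_shift in H; cbv zeta in H; cbn [judgement].
  set (L := pi1 (cert_claim c)) in *; set (L' := pi2 (cert_claim c)) in *.
  split_bool; use_premises IH c; simpl_codes.
  - match goal with H1 : L = 0, H2 : L' = 0 |- _ => rewrite H1, H2 end; reflexivity.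
  - rewrite (seq_decode_pos L), (seq_decode_pos L') by assumption; cbn [map].
    match goal with H : fdecode _ = fsubst _ _ |- _ => rewrite H end.
    match goal with H : map fdecode (seq_decode (pi2 (pred L'))) = _ |- _ => rewrite H end.
    f_equal; apply fsubst_ext, subst_of_code_shift.
Qed.

Lemma sound_tsubst c :
  sound_below c -> cert_kind c = 4 -> check_tsubst c (history (check_step is_axiom) c) = true ->
  judgement 4 (cert_claim c).
Proof.
  intros IH Hk H; unfold check_tsubst in H; cbv zeta in H; cbn [judgement].
  set (d := pi1 (cert_claim c)) in *.
  set (a := pi1 (pi2 (cert_claim c))) in *; set (b := pi2 (pi2 (cert_claim c))) in *.
  split_bool; use_premises IH c; simpl_codes.
  - rewrite (tdecode_var a) by assumption; cbn [tsubst]; unfold subst_of_code.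
    match goal with H : pi1 d = 0 |- _ => rewrite H end; cbn [Nat.eqb].
    match goal with H : b = _ |- _ => rewrite H end.
    destruct (pi2 a <? pi2 d); apply tdecode_pr_var.
  - rewrite (tdecode_var a) by assumption; cbn [tsubst]; unfold subst_of_code.
    match goal with H : pi1 d = 1 |- _ => rewrite H end; cbn [Nat.eqb].
    match goal with H : (if _ then _ else _) = true |- _ => revert H end.
    destruct (pi2 a <? pi1 (pi2 d)); [|destruct (pi2 a =? pi1 (pi2 d))];
      intro E; apply Nat.eqb_eq in E; rewrite E; [apply tdecode_pr_var | reflexivity |
                                                apply tdecode_pr_var].
  - rewrite (tdecode_func a), (tdecode_func b) by assumption; cbn [tsubst]; f_equal;
      [congruence | assumption].
Qed.

Lemma sound_tsubsts c :
  sound_below c -> cert_kind c = 5 -> check_tsubsts c (history (check_step is_axiom) c) = true ->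
  judgement 5 (cert_claim c).
Proof.
  intros IH Hk H; unfold check_tsubsts in H; cbv zeta in H; cbn [judgement].
  set (a := pi1 (pi2 (cert_claim c))) in *; set (b := pi2 (pi2 (cert_claim c))) in *.
  split_bool; use_premises IH c; simpl_codes.
  - match goal with H1 : a = 0, H2 : b = 0 |- _ => rewrite H1, H2 end; reflexivity.
  - rewrite (seq_decode_pos a), (seq_decode_pos b) by assumption; cbn [map]; f_equal; auto.
Qed.

Lemma up_subst_of_code_lift' d i :
  pi1 d = 0 -> up (subst_of_code d) i = subst_of_code (pr 0 (S (pi2 d))) i.
Proof.
  intro H; rewrite <- (pr_pi d) at 1; rewrite H; apply up_subst_of_code_lift.
Qed.

Lemma up_subst_of_code_inst' d u' i :
  pi1 d = 1 -> tdecode u' = tsubst (fun k => var (S k)) (tdecode (pi2 (pi2 d))) ->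
  up (subst_of_code d) i = subst_of_code (pr 1 (pr (S (pi1 (pi2 d))) u')) i.
Proof.
  intros H Hu; rewrite <- (pr_pi d) at 1; rewrite H, <- (pr_pi (pi2 d)) at 1.
  apply up_subst_of_code_inst; assumption.
Qed.

Lemma sound_fsubst c :
  sound_below c -> cert_kind c = 6 -> check_fsubst c (history (check_step is_axiom) c) = true ->
  judgement 6 (cert_claim c).
Proof.
  intros IH Hk H; unfold check_fsubst in H; cbv zeta in H; cbn [judgement].
  set (d := pi1 (cert_claim c)) in *.
  set (a := pi1 (pi2 (cert_claim c))) in *; set (b := pi2 (pi2 (cert_claim c))) in *.
  split_bool; use_premises IH c; simpl_codes.
  - match goal with H1 : a = 0, H2 : b = 0 |- _ => rewrite H1, H2 end.
    rewrite fdecode_zero; reflexivity.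
  - rewrite (fdecode_rel a), (fdecode_rel b) by assumption; cbn [fsubst]; f_equal;
      [congruence | assumption].
  - rewrite (fdecode_eq a), (fdecode_eq b) by assumption; cbn [fsubst]; f_equal; assumption.
  - rewrite (fdecode_imp a), (fdecode_imp b) by assumption; cbn [fsubst]; f_equal; assumption.
  - rewrite (fdecode_all a), (fdecode_all b) by assumption; cbn [fsubst]; f_equal.
    match goal with H : fdecode (pi2 b) = _ |- _ => rewrite H end.
    apply fsubst_ext; intro i; symmetry; apply up_subst_of_code_lift'; assumption.
  - rewrite (fdecode_all a), (fdecode_all b) by assumption; cbn [fsubst]; f_equal.
    match goal with H : fdecode (pi2 b) = _ |- _ => rewrite H end.
    apply fsubst_ext; intro i; symmetry; apply up_subst_of_code_inst'; [assumption|].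
    match goal with H : tdecode _ = tsubst _ _ |- _ => rewrite H end.
    apply tsubst_code_shift.
Qed.

Lemma sound_axioms c :
  sound_below c -> cert_kind c = 7 ->
  check_axioms is_axiom c (history (check_step is_axiom) c) = true ->
  judgement 7 (cert_claim c).
Proof.
  intros IH Hk H; unfold check_axioms in H; cbn [judgement].
  split_bool; use_premises IH c; simpl_codes.
  - match goal with H1 : cert_claim c = 0 |- _ => rewrite H1 end; intros x [].
  - rewrite seq_decode_pos by assumption; intros x [<-|Hx]; auto.
Qed.

Lemma sound_proof c :
  sound_below c -> cert_kind c = 8 -> check_proof c (history (check_step is_axiom) c) = true ->
  judgement 8 (cert_claim c).
Proof.
  intros IH Hk H; unfold check_proof in H; cbn [judgement].
  split_bool; use_premises IH c; simpl_codes; split; assumption.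
Qed.

Theorem valid_sound c : valid is_axiom c = true -> judgement (cert_kind c) (cert_claim c).
Proof.
  induction c as [c IH] using (well_founded_induction lt_wf); intro H.
  assert (IHc : sound_below c) by (intros j Hj; apply IH; assumption).
  unfold valid, check_node in H.
  split_bool; match goal with E : cert_kind c = _ |- _ => rewrite E end.
  - apply sound_nd; assumption.
  - apply sound_mem; assumption.
  - apply sound_shift; assumption.
  - apply sound_tsubst; assumption.
  - apply sound_tsubsts; assumption.
  - apply sound_fsubst; assumption.
  - apply sound_axioms; assumption.
  - apply sound_proof; assumption.
Qed.

End Soundness.

Section Completeness.
Variable is_axiom : nat -> bool.

Definition certified (k C : nat) : Prop :=
  exists j, valid is_axiom j = true /\ cert_kind j = k /\ cert_claim j = C.

Lemma ltb_0_succ n : (0 <? S n) = true.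
Proof. reflexivity. Qed.

Ltac node_sub_lt :=
  match goal with
  | |- ?s < cert_node ?k ?r ?C ?a ?b ?x ?y =>
      pose proof (cert_node_subs_lt k r C a b x y ltac:(lia)); tauto
  end.

Ltac check_node_tac :=
  unfold valid at 1;
  unfold check_node, check_nd, check_mem, check_shift, check_tsubst, check_tsubsts,
    check_fsubst, check_axioms, check_proof; cbv zeta;
  rewrite ?cert_kind_node, ?cert_rule_node, ?cert_claim_node, ?cert_sub1_node,
    ?cert_sub2_node, ?cert_sub3_node, ?cert_sub4_node;
  rewrite !premise_history by node_sub_lt;
  repeat progress (
    cbn [andb orb Nat.eqb Nat.pred seq_code fold_right];
    repeat match goal with
    | H : valid is_axiom ?j = true |- context [valid is_axiom ?j] => rewrite H
    | H : cert_kind ?j = _ |- context [cert_kind ?j] => rewrite H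
    | H : cert_claim ?j = _ |- context [cert_claim ?j] => rewrite H
    | H : is_axiom ?j = true |- context [is_axiom ?j] => rewrite H
    end;
    rewrite ?pi1_pr, ?pi2_pr, ?Nat.eqb_refl, ?ltb_0_succ);
  try reflexivity.

Ltac certify k r C a b x y :=
  exists (cert_node k r C a b x y); rewrite cert_kind_node, cert_claim_node;
  split; [check_node_tac | split; reflexivity].

Lemma certified_mem x l : In x l -> certified 2 (pr x (seq_code l)).
Proof.
  induction l as [|a l IH]; intro H; [destruct H|].
  destruct (Nat.eq_dec a x) as [->|Hne].
  - certify 2 0 (pr x (seq_code (x :: l))) 0 0 0 0.
  - destruct H as [H|H]; [congruence|]; destruct (IH H) as [j [H1 [H2 H3]]].
    certify 2 1 (pr x (seq_code (a :: l))) j 0 0 0.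
Qed.

Lemma certified_axioms l : (forall x, In x l -> is_axiom x = true) -> certified 7 (seq_code l).
Proof.
  induction l as [|a l IH]; intro H.
  - certify 7 0 (seq_code []) 0 0 0 0.
  - destruct IH as [j [H1 [H2 H3]]]; [intros; apply H; right; assumption|].
    assert (Ha : is_axiom a = true) by (apply H; left; reflexivity).
    certify 7 1 (seq_code (a :: l)) j 0 0 0.
Qed.

Definition subst_code_ok (d : nat) : Prop :=
  (exists m, d = pr 0 m) \/ (exists m u, d = pr 1 (pr m (tcode u))).

Lemma tcode_subst_of_code_lift m i :
  tcode (subst_of_code (pr 0 m) i) = pr 0 (if i <? m then i else S i).
Proof.
  unfold subst_of_code; rewrite ?pi1_pr, ?pi2_pr; cbn [Nat.eqb].
  destruct (i <? m); reflexivity.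
Qed.

Lemma tcode_subst_of_code_inst m u i :
  tcode (subst_of_code (pr 1 (pr m (tcode u))) i) =
  if i <? m then pr 0 i else if i =? m then tcode u else pr 0 (pred i).
Proof.
  unfold subst_of_code; repeat rewrite ?pi1_pr, ?pi2_pr; cbn [Nat.eqb].
  destruct (i <? m); [reflexivity|].
  destruct (i =? m); [rewrite tdecode_tcode|]; reflexivity.
Qed.

Lemma certified_tsubst t : forall d, subst_code_ok d ->
  certified 4 (pr d (pr (tcode t) (tcode (tsubst (subst_of_code d) t)))).
Proof.
  induction t as [i|f ts IHts] using term_rect'; intros d Hd.
  - cbn [tsubst tcode]; destruct Hd as [[m ->]|[m [u ->]]].
    + rewrite tcode_subst_of_code_lift.
      certify 4 0 (pr (pr 0 m) (pr (pr 0 i) (pr 0 (if i <? m then i else S i)))) 0 0 0 0.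
    + rewrite tcode_subst_of_code_inst.
      certify 4 0 (pr (pr 1 (pr m (tcode u))) (pr (pr 0 i)
        (if i <? m then pr 0 i else if i =? m then tcode u else pr 0 (pred i)))) 0 0 0 0.
      destruct (i <? m); [|destruct (i =? m)]; rewrite Nat.eqb_refl; reflexivity.
  - set (ts' := map (tsubst (subst_of_code d)) ts).
    assert (HL : certified 5 (pr d (pr (seq_code (map tcode ts)) (seq_code (map tcode ts'))))).
    { subst ts'; induction IHts as [|u ts Hu Hts IH].
      - certify 5 0 (pr d (pr (seq_code []) (seq_code []))) 0 0 0 0.
      - destruct IH as [j2 [A1 [A2 A3]]]; destruct (Hu d Hd) as [j1 [B1 [B2 B3]]]; cbn [map].
        certify 5 1 (pr d (pr (seq_code (tcode u :: map tcode ts))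
          (seq_code (tcode (tsubst (subst_of_code d) u) ::
                     map tcode (map (tsubst (subst_of_code d)) ts))))) j1 j2 0 0. }
    destruct HL as [j [A1 [A2 A3]]]; cbn [tsubst]; fold ts'; rewrite !tcode_func.
    certify 4 1 (pr d (pr (pr 1 (pr f (seq_code (map tcode ts))))
                          (pr 1 (pr f (seq_code (map tcode ts')))))) j 0 0 0.
Qed.

Lemma certified_fsubst p : forall d, subst_code_ok d ->
  certified 6 (pr d (pr (fcode p) (fcode (fsubst (subst_of_code d) p)))).
Proof.
  induction p as [|r ts|s t|p IHp q IHq|p IH]; intros d Hd; cbn [fsubst].
  - certify 6 0 (pr d (pr (fcode fal) (fcode fal))) 0 0 0 0.
  - set (ts' := map (tsubst (subst_of_code d)) ts); rewrite !fcode_rel.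
    assert (HL : certified 5 (pr d (pr (seq_code (map tcode ts)) (seq_code (map tcode ts'))))).
    { subst ts'; induction ts as [|u ts IH].
      - certify 5 0 (pr d (pr (seq_code []) (seq_code []))) 0 0 0 0.
      - destruct IH as [j2 [A1 [A2 A3]]]; destruct (certified_tsubst u d Hd) as [j1 [B1 [B2 B3]]].
        cbn [map].
        certify 5 1 (pr d (pr (seq_code (tcode u :: map tcode ts))
          (seq_code (tcode (tsubst (subst_of_code d) u) ::
                     map tcode (map (tsubst (subst_of_code d)) ts))))) j1 j2 0 0. }
    destruct HL as [j [A1 [A2 A3]]].
    certify 6 1 (pr d (pr (pr 1 (pr r (seq_code (map tcode ts))))
                          (pr 1 (pr r (seq_code (map tcode ts')))))) j 0 0 0.
  - destruct (certified_tsubst s d Hd) as [j1 [A1 [A2 A3]]].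
    destruct (certified_tsubst t d Hd) as [j2 [B1 [B2 B3]]]; cbn [fcode].
    certify 6 2 (pr d (pr (pr 2 (pr (tcode s) (tcode t)))
      (pr 2 (pr (tcode (tsubst (subst_of_code d) s)) (tcode (tsubst (subst_of_code d) t))))))
      j1 j2 0 0.
  - destruct (IHp d Hd) as [j1 [A1 [A2 A3]]]; destruct (IHq d Hd) as [j2 [B1 [B2 B3]]].
    cbn [fcode].
    certify 6 3 (pr d (pr (pr 3 (pr (fcode p) (fcode q)))
      (pr 3 (pr (fcode (fsubst (subst_of_code d) p)) (fcode (fsubst (subst_of_code d) q))))))
      j1 j2 0 0.
  - cbn [fcode]; destruct Hd as [[m ->]|[m [u ->]]].
    + destruct (IH (pr 0 (S m))) as [j [A1 [A2 A3]]]; [left; eauto|].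
      rewrite (fsubst_ext p _ _ (up_subst_of_code_lift m)).
      certify 6 4 (pr (pr 0 m) (pr (pr 4 (fcode p))
        (pr 4 (fcode (fsubst (subst_of_code (pr 0 (S m))) p))))) j 0 0 0.
    + set (u' := tsubst (fun k => var (S k)) u).
      destruct (certified_tsubst u (pr 0 0)) as [j2 [B1 [B2 B3]]]; [left; eauto|].
      rewrite tsubst_code_shift in B3; fold u' in B3.
      destruct (IH (pr 1 (pr (S m) (tcode u')))) as [j [A1 [A2 A3]]]; [right; eauto|].
      rewrite (fsubst_ext p (up (subst_of_code (pr 1 (pr m (tcode u)))))
                 (subst_of_code (pr 1 (pr (S m) (tcode u'))))).
      2: { intro i; apply up_subst_of_code_inst; rewrite !tdecode_tcode; reflexivity. }
      certify 6 4 (pr (pr 1 (pr m (tcode u))) (pr (pr 4 (fcode p))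
        (pr 4 (fcode (fsubst (subst_of_code (pr 1 (pr (S m) (tcode u')))) p))))) j j2 0 0.
Qed.

Lemma certified_inst p t :
  certified 6 (pr (pr 1 (pr 0 (tcode t))) (pr (fcode p) (fcode (inst t p)))).
Proof.
  destruct (certified_fsubst p (pr 1 (pr 0 (tcode t)))) as [j [A1 [A2 A3]]]; [right; eauto|].
  rewrite (fsubst_ext p _ (scons t var)) in A3.
  - exists j; auto.
  - intro i; rewrite subst_of_code_inst0, tdecode_tcode; reflexivity.
Qed.

Lemma certified_shift G :
  certified 3 (pr (seq_code (map fcode G)) (seq_code (map fcode (map shift G)))).
Proof.
  induction G as [|p G IH].
  - certify 3 0 (pr (seq_code []) (seq_code [])) 0 0 0 0.
  - destruct IH as [j2 [A1 [A2 A3]]].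
    destruct (certified_fsubst p (pr 0 0)) as [j1 [B1 [B2 B3]]]; [left; eauto|].
    rewrite (fsubst_ext p _ (fun k => var (S k))) in B3 by apply subst_of_code_shift.
    fold (shift p) in B3; cbn [map].
    certify 3 1 (pr (seq_code (fcode p :: map fcode G))
      (seq_code (fcode (shift p) :: map fcode (map shift G)))) j1 j2 0 0.
Qed.

Lemma certified_nd G p : nd G p -> certified 1 (pr (seq_code (map fcode G)) (fcode p)).
Proof.
  induction 1 as [G p H|G p q H IH|G p q H1 IH1 H2 IH2|G p H IH|G p t H IH|G p H IH|G p H IH
                 |G t|G s t p H1 IH1 H2 IH2].
  - destruct (certified_mem (fcode p) (map fcode G)) as [j [A1 [A2 A3]]]; [apply in_map; auto|].
    certify 1 0 (pr (seq_code (map fcode G)) (fcode p)) j 0 0 0.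
  - destruct IH as [j [A1 [A2 A3]]]; cbn [map] in A3; cbn [fcode].
    certify 1 1 (pr (seq_code (map fcode G)) (pr 3 (pr (fcode p) (fcode q)))) j 0 0 0.
  - destruct IH1 as [j1 [A1 [A2 A3]]]; destruct IH2 as [j2 [B1 [B2 B3]]]; cbn [fcode] in A3.
    certify 1 2 (pr (seq_code (map fcode G)) (fcode q)) j1 j2 0 0.
  - destruct IH as [j1 [A1 [A2 A3]]]; destruct (certified_shift G) as [j2 [B1 [B2 B3]]].
    cbn [fcode]; certify 1 3 (pr (seq_code (map fcode G)) (pr 4 (fcode p))) j1 j2 0 0.
  - destruct IH as [j1 [A1 [A2 A3]]]; cbn [fcode] in A3.
    destruct (certified_inst p t) as [j2 [B1 [B2 B3]]].
    certify 1 4 (pr (seq_code (map fcode G)) (fcode (inst t p))) j1 j2 0 0.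
  - destruct IH as [j [A1 [A2 A3]]]; cbn [fcode] in A3.
    certify 1 5 (pr (seq_code (map fcode G)) (fcode p)) j 0 0 0.
  - destruct IH as [j [A1 [A2 A3]]]; cbn [fcode neg] in A3.
    certify 1 6 (pr (seq_code (map fcode G)) (fcode p)) j 0 0 0.
  - cbn [fcode]; certify 1 7 (pr (seq_code (map fcode G)) (pr 2 (pr (tcode t) (tcode t)))) 0 0 0 0.
  - destruct IH1 as [j1 [A1 [A2 A3]]]; destruct IH2 as [j2 [B1 [B2 B3]]]; cbn [fcode] in A3.
    destruct (certified_inst p s) as [j3 [C1 [C2 C3]]].
    destruct (certified_inst p t) as [j4 [D1 [D2 D3]]].
    certify 1 8 (pr (seq_code (map fcode G)) (fcode (inst t p))) j1 j2 j3 j4.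
Qed.

Lemma certified_proof G p :
  nd G p -> (forall x, In x (map fcode G) -> is_axiom x = true) ->
  certified 8 (pr (seq_code (map fcode G)) (fcode p)).
Proof.
  intros H1 H2; destruct (certified_nd G p H1) as [j1 [A1 [A2 A3]]].
  destruct (certified_axioms _ H2) as [j2 [B1 [B2 B3]]].
  certify 8 0 (pr (seq_code (map fcode G)) (fcode p)) j1 j2 0 0.
Qed.

End Completeness.

Lemma computable_bool_of_recursive (X : nat -> Prop) :
  recursive X ->
  exists b : nat -> bool, computable (fun v => Nat.b2n (b (nth 0 v 0))) /\
                          forall n, b n = true <-> X n.
Proof.
  intros [f Hf].
  exists (fun n => if excluded_middle_informative (X n) then true else false); split.
  - exists (rC f [rP 0]); intro v; econstructor; [repeat constructor|].
    destruct (excluded_middle_informative (X (nth 0 v 0))) as [H|H]; apply Hf, H.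
  - intro n; destruct (excluded_middle_informative (X n)); split; congruence || tauto.
Qed.

Lemma least_witness (f : nat -> bool) k :
  f k = true -> exists m, f m = true /\ forall i, i < m -> f i = false.
Proof.
  intro Hk.
  assert (H : forall n, (exists m, f m = true /\ forall i, i < m -> f i = false) \/
                        forall i, i < n -> f i = false).
  { induction n as [|n [IH|IH]]; [right; lia | left; exact IH|].
    destruct (f n) eqn:E; [left; exists n; auto | right].
    intros i Hi; destruct (Nat.eq_dec i n) as [->|]; [exact E | apply IH; lia]. }
  destruct (H (S k)) as [?|H']; [assumption|].
  rewrite H' in Hk by lia; discriminate.
Qed.

(* Minimisation: [f] evaluates [out] at the least witness. *)
Lemma computable_search (P : nat -> nat -> bool) (out : nat -> nat -> nat) :
  computable (fun v => Nat.b2n (P (nth 0 v 0) (nth 1 v 0))) ->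
  computable (fun v => out (nth 0 v 0) (nth 1 v 0)) ->
  (forall n, exists c, P c n = true) ->
  exists f, forall n, exists c, P c n = true /\ eval f [n] (out c n).
Proof.
  intros HP [g Hg] Hex.
  destruct (computable_if _ _ _ HP (computable_const 0) (computable_const 1)) as [q Hq].
  exists (rC g [rM q; rP 0]); intro n.
  destruct (Hex n) as [c0 Hc0]; destruct (least_witness (fun c => P c n) c0 Hc0) as [m [Hm Hlt]].
  exists m; split; [assumption|].
  econstructor; [|apply (Hg [m; n])].
  repeat constructor.
  - specialize (Hq [m; n]); cbn in Hq; rewrite Hm in Hq; exact Hq.
  - intros i Hi; exists 0; specialize (Hq [i; n]); cbn in Hq; rewrite (Hlt i Hi) in Hq; exact Hq.
Qed.

Definition proof_certificate (is_axiom : nat -> bool) (c : nat) : bool :=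
  valid is_axiom c && (cert_kind c =? 8).

Lemma provable_iff_certificate (T : theory) (is_axiom : nat -> bool) :
  (forall n, is_axiom n = true <-> exists q, th_ax T q /\ fcode q = n) ->
  forall p, provable T p <->
            exists c, proof_certificate is_axiom c = true /\ pi2 (cert_claim c) = fcode p.
Proof.
  intros Hax p; split.
  - intros [G [HG Hnd]].
    destruct (certified_proof is_axiom G p Hnd) as [c [H1 [H2 H3]]].
    { intros x Hx; apply in_map_iff in Hx as [q [<- Hq]]; apply Hax; eauto. }
    exists c; unfold proof_certificate; rewrite H1, H2, H3, pi2_pr; auto.
  - intros [c [Hc Hp]]; unfold proof_certificate in Hc.
    apply andb_true_iff in Hc as [Hc Hk]; apply Nat.eqb_eq in Hk.
    pose proof (valid_sound is_axiom c Hc) as Hj; rewrite Hk in Hj; destruct Hj as [Hnd Hall].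
    rewrite Hp, fdecode_fcode in Hnd.
    exists (map fdecode (seq_decode (pi1 (cert_claim c)))); split; [|exact Hnd].
    intros q Hq; apply in_map_iff in Hq as [x [<- Hx]].
    destruct (proj1 (Hax x) (Hall x Hx)) as [q [Hq <-]]; rewrite fdecode_fcode; exact Hq.
Qed.

Definition code_neg (a : nat) : nat := pr 3 (pr a (pr 0 0)).

Lemma fcode_neg p : fcode (neg p) = code_neg (fcode p).
Proof. reflexivity. Qed.

Lemma code_neg_neq a : code_neg a <> a.
Proof.
  unfold code_neg; pose proof (pr_gt_r 3 (pr a (pr 0 0)) ltac:(lia)).
  pose proof (pr_ge_l a (pr 0 0)); lia.
Qed.

(* Search for a certificate proving [phi n] or its negation. *)
Lemma recursive_provable_of_decided (T : theory) (phi : nat -> form) :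
  rec_axiomatizable T -> consistent T ->
  computable (fun v => fcode (phi (nth 0 v 0))) ->
  (forall n, provable T (phi n) \/ provable T (neg (phi n))) ->
  recursive (fun n => provable T (phi n)).
Proof.
  intros Hrec Hcons Hphi Hdec.
  destruct (computable_bool_of_recursive _ Hrec) as [is_axiom [Hax_c Hax]].
  pose proof (provable_iff_certificate T is_axiom Hax) as Hcert.
  pose (code n := fcode (phi n)); change (computable (fun v => code (nth 0 v 0))) in Hphi.
  set (answers c n := proof_certificate is_axiom c &&
                      ((pi2 (cert_claim c) =? code n) ||
                       (pi2 (cert_claim c) =? code_neg (code n)))).
  destruct (computable_search answers (fun c n => Nat.b2n (pi2 (cert_claim c) =? code n)))
    as [f Hf].
  { pose proof (computable_valid is_axiom Hax_c).
    unfold answers, proof_certificate, code_neg, cert_kind, cert_claim; computable_tac. }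
  { unfold cert_claim; computable_tac. }
  { intro n; destruct (Hdec n) as [H|H]; apply Hcert in H as [c [Hc Hp]]; exists c;
      unfold answers; rewrite Hc, Hp; [rewrite Nat.eqb_refl | rewrite fcode_neg, Nat.eqb_refl,
      orb_true_r]; reflexivity. }
  exists f; intro n; destruct (Hf n) as [c [Hc Hev]].
  unfold answers in Hc; apply andb_true_iff in Hc as [Hc Hclaim].
  apply orb_true_iff in Hclaim as [E|E]; apply Nat.eqb_eq in E; rewrite E in Hev; split; intro Hn.
  - rewrite Nat.eqb_refl in Hev; exact Hev.
  - exfalso; apply Hn, Hcert; eauto.
  - exfalso; apply Hcons, (provable_mp T (phi n)); [apply Hcert; exists c; auto | exact Hn].
  - rewrite (proj2 (Nat.eqb_neq _ _) (code_neg_neq _)) in Hev; exact Hev.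
Qed.

Lemma computable_fcode_iter (F : form -> form) (h : nat -> nat) (p0 : form) :
  (forall p, fcode (F p) = h (fcode p)) -> computable (fun v => h (nth 0 v 0)) ->
  computable (fun v => fcode (Nat.iter (nth 0 v 0) F p0)).
Proof.
  intros HF Hh.
  apply (computable_ext (fun v => prim_rec (fun _ => fcode p0) (fun _ r _ => h r) (nth 0 v 0) 0)).
  { intro v; cbv beta; generalize (nth 0 v 0); intro n; unfold prim_rec.
    induction n as [|n IH]; cbn [nat_rect Nat.iter]; [|rewrite HF, IH]; reflexivity. }
  apply (computable_comp2 (prim_rec _ _)); [apply computable_prim_rec | computable_tac..].
  - computable_tac.
  - exact (computable_comp1 h _ Hh (computable_proj 1)).
Qed.

Definition code_and (a b : nat) : nat := code_neg (pr 3 (pr a (code_neg b))).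
Definition code_ex (a : nat) : nat := code_neg (pr 4 (code_neg a)).

Section NumeralTranslation.
Variable I : interp.

Lemma ttr_numeral_S n off :
  ttr I (numeral (S n)) off 0 =
  ex (and (and (ttr I (numeral n) (off + 1) 0) tru) (fsubst (scons (var 1) var) (i_fun I 1 1))).
Proof. reflexivity. Qed.

Lemma ttr_numeral_off n off : ttr I (numeral n) off 0 = ttr I (numeral n) 0 0.
Proof.
  revert off; induction n as [|n IH]; intro off; [reflexivity|].
  rewrite !ttr_numeral_S, (IH (off + 1)), (IH (0 + 1)); reflexivity.
Qed.

Lemma ttr_numeral n :
  ttr I (numeral n) 0 0 =
  Nat.iter n (fun q => ex (and (and q tru) (fsubst (scons (var 1) var) (i_fun I 1 1))))
    (and tru (fsubst (scons (var 0) var) (i_fun I 0 0))).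
Proof.
  induction n as [|n IH]; [reflexivity|].
  rewrite ttr_numeral_S, ttr_numeral_off, IH; reflexivity.
Qed.

Lemma translate_rel_numeral n :
  translate I (rel 0 [numeral n]) = ex (and (and (ttr I (numeral n) 0 0) tru) (i_rel I 0 1)).
Proof. cbn [translate length exN Nat.iter targs]; rewrite ttr_numeral_off; reflexivity. Qed.

Lemma computable_fcode_translate_numeral :
  computable (fun v => fcode (translate I (rel 0 [numeral (nth 0 v 0)]))).
Proof.
  set (s := fcode (fsubst (scons (var 1) var) (i_fun I 1 1))).
  assert (Hiter : computable (fun v => fcode (ttr I (numeral (nth 0 v 0)) 0 0))).
  { eapply computable_ext; [intro v; rewrite ttr_numeral; reflexivity|].
    apply (computable_fcode_iter _ (fun a => code_ex (code_and (code_and a (fcode tru)) s)));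
      [reflexivity | unfold code_ex, code_and, code_neg; computable_tac]. }
  eapply computable_ext; [intro v; rewrite translate_rel_numeral; reflexivity|].
  change (computable (fun v =>
    code_ex (code_and (code_and (fcode (ttr I (numeral (nth 0 v 0)) 0 0)) (fcode tru))
                      (fcode (i_rel I 0 1))))).
  apply (computable_comp1
           (fun a => code_ex (code_and (code_and a (fcode tru)) (fcode (i_rel I 0 1)))));
    [unfold code_ex, code_and, code_neg; computable_tac | exact Hiter].
Qed.

Lemma sentence_translate_numeral (T W : theory) n :
  is_interpretation T W I -> th_fun T 0 0 -> th_fun T 1 1 -> th_rel T 0 1 ->
  sentence_of W (translate I (rel 0 [numeral n])).
Proof.
  intros [_ [_ [Hfun [Hrel _]]]] H0 H1 HP.
  destruct (Hfun 0 0 H0) as [L0 B0], (Hfun 1 1 H1) as [L1 B1], (Hrel 0 1 HP) as [LR BR].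
  assert (HT : flang (th_fun W) (th_rel W) (ttr I (numeral n) 0 0) /\
               fbound 1 (ttr I (numeral n) 0 0)).
  { induction n as [|n [IHl IHb]].
    - cbn [ttr numeral Nat.iter exN length flang fbound and neg tru]; repeat split; auto.
      + apply flang_subst; [assumption | intros [|i]; constructor].
      + eapply fbound_subst; [eassumption | intros [|i] Hi; cbn; lia].
    - rewrite ttr_numeral_S, ttr_numeral_off; cbn [flang fbound and neg tru ex]; repeat split; auto.
      + apply flang_subst; [assumption | intros [|[|i]]; constructor].
      + eapply fbound_mono; [eassumption | lia].
      + eapply fbound_subst; [eassumption | intros [|[|i]] Hi; cbn; lia]. }
  destruct HT as [Hl Hb]; split; rewrite translate_rel_numeral;
    cbn [flang fbound and neg tru ex]; repeat split; auto.
Qed.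

End NumeralTranslation.

Theorem mainTheorem3 (A B : nat -> Prop) :
  rec_inseparable A B -> G1 (U_AB A B).
Proof.
  intros [_ [_ [_ Hinsep]]] S _ Hrec Hcons [I HI] Hcomp.
  set (phi n := translate I (rel 0 [numeral n])).
  assert (Hax : forall p, th_ax (U_AB A B) p -> provable S (translate I p)) by apply HI.
  apply Hinsep; exists (fun n => provable S (phi n)); split; [|split].
  - apply recursive_provable_of_decided; [assumption | assumption | |].
    + apply computable_fcode_translate_numeral.
    + intro n; apply Hcomp, (sentence_translate_numeral I (U_AB A B)); cbn; auto.
  - intros n Hn; apply Hax; cbn; eauto.
  - intros n Hn HB; apply Hcons, (provable_mp S (phi n)); [|exact Hn].
    apply (Hax (neg (rel 0 [numeral n]))); cbn; eauto.
Qed.
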